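(* The logic $\mathbf{DL}(\partial)$ can simulate $\mathbf{DL}(\partial^* )$ with respect to addition of rules, and the logic $\mathbf{DL}(\delta)$ can simulate $\mathbf{DL}(\delta^* )$ with respect to addition of rules. Explicitly, for $(d_1,d_2)\in\{(\partial^*,\partial),(\delta^*,\delta)\}$ and for every defeasible theory $D$, there is a defeasible theory $D'$ with the following property. For every theory $A=(\emptyset,R_A,\emptyset)$ consisting only of rules that is modular with respect to $D$ and $D'$, and for every literal $q\in\Sigma(D+A)$: - $D+A\vdash+d_1q$ iff $D'+A\vdash+d_2q$, and - $D+A\vdash-d_1q$ iff $D'+A\vdash-d_2q$.
   Context: Defeasible theories. Literals come from a language closed under negation. For a literal $q$, its complement ${\sim}q$ is $\neg p$ if $q=p$ is a proposition, and $p$ if $q=\neg p$. A defeasible theory $D=(F,R,>)$ consists of: - a set $F$ of literals (the facts); - a finite set $R$ of rules, each with a distinct label; - an acyclic binary relation $>$ on labels (the superiority relation). Each rule $r$ has a finite set $A(r)$ of body literals and a head literal. A rule is one of: - strict ($\rightarrow$); - defeasible ($\Rightarrow$); - a defeater ($\leadsto$). Notation: $R_s$ is the set of strict rules, $R_{sd}$ the set of strict or defeasible rules, and $R[q]$, $R_s[q]$, $R_{sd}[q]$ are the corresponding sets of rules with head $q$. $\Sigma(D)$ and $\Lambda(D)$ are the literals and the labels occurring in $D$. Conclusions. Conclusions have the form $\pm d\,q$ for a tag $d\in\{\Delta,\partial,\partial^*,\delta,\sigma,\delta^*,\sigma^*\}$. The conclusions of $D$ are $\bigcup_n\mathcal T_D\uparrow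 n$, where $\mathcal T_D\uparrow 0=\emptyset$ and $\mathcal T_D\uparrow(n+1)=\mathcal T_D(\mathcal T_D\uparrow n)$. We write $D\vdash\alpha$ when $\alpha$ is a conclusion of $D$. For a set $B$ of literals, ''$+dB\subseteq E$'' means $+d\,a\in E$ for all $a\in B$. The operator $\mathcal T_D$ is defined by the following clauses. $+\Delta q\in\mathcal T_D(E)$ iff $q\in F$, or some $r\in R_s[q]$ has $+\Delta A(r)\subseteq E$. $-\Delta q\in\mathcal T_D(E)$ iff $q\notin F$ and every $r\in R_s[q]$ has some $a\in A(r)$ with $-\Delta a\in E$. $+\partial q\in\mathcal T_D(E)$ iff either $+\Delta q\in E$, or all of the following hold: - some $r\in R_{sd}[q]$ has $+\partial A(r)\subseteq E$; - $-\Delta{\sim}q\in E$; - every $s\in R[{\sim}q]$ either has some $a\in A(s)$ with $-\partial a\in E$, or there is $t\in R_{sd}[q]$ with $+\partial A(t)\subseteq E$ and $t>s$. $-\partial q\in\mathcal T_D(E)$ iff $-\Delta q\in E$ and one of the following holds: - every $r\in R_{sd}[q]$ has some $a\in A(r)$ with $-\partial a\in E$; - $+\Delta{\sim}q\in E$; - some $s\in R[{\sim}q]$ has $+\partial A(s)\subseteq E$ and every $t\in R_{sd}[q]$ has some $a\in A(t)$ with $-\partial a\in E$ or not $t>s$. $+\partial^*q\in\mathcal T_D(E)$ iff either $+\Delta q\in E$, or some $r\in R_{sd}[q]$ satisfies: - $+\partial^*A(r)\subseteq E$; - $-\Delta{\sim}q\in E$; - every $s\in R[{\sim}q]$ has some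 $a\in A(s)$ with $-\partial^*a\in E$, or $r>s$. $-\partial^*q\in\mathcal T_D(E)$ iff $-\Delta q\in E$ and every $r\in R_{sd}[q]$ satisfies one of: - some $a\in A(r)$ has $-\partial^*a\in E$; - $+\Delta{\sim}q\in E$; - some $s\in R[{\sim}q]$ has $+\partial^*A(s)\subseteq E$ and not $r>s$. $\pm\delta$ are defined exactly as $\pm\partial$, with $\partial$ replaced by $\delta$, with two exceptions. In the $+\delta$ clause, the escape for $s$ is ''some $a\in A(s)$ has $-\sigma a\in E$''. In the $-\delta$ clause, the condition on $s$ is ''$+\sigma A(s)\subseteq E$''. $+\sigma q\in\mathcal T_D(E)$ iff either $+\Delta q\in E$, or some $r\in R_{sd}[q]$ has $+\sigma A(r)\subseteq E$ and every $s\in R[{\sim}q]$ has some $a\in A(s)$ with $-\delta a\in E$ or not $s>r$. $-\sigma q\in\mathcal T_D(E)$ iff $-\Delta q\in E$ and every $r\in R_{sd}[q]$ has some $a\in A(r)$ with $-\sigma a\in E$, or there is $s\in R[{\sim}q]$ with $+\delta A(s)\subseteq E$ and $s>r$. $\pm\delta^*$ are defined exactly as $\pm\partial^*$, with $\partial^*$ replaced by $\delta^*$, with two exceptions. In the $+\delta^*$ clause, the escape for $s$ is ''some $a\in A(s)$ has $-\sigma^*a\in E$''. In the $-\delta^*$ clause, the condition on $s$ is ''$+\sigma^*A(s)\subseteq E$''. $\pm\sigma^*$ are defined exactly as $\pm\sigma$, with $\sigma,\delta$ replaced by $\sigma^*,\delta^*$ respectively. $\mathbf{DL}(d)$ denotes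 the logic with principal tag $d$. Addition. For theories $D=(F,R,>)$ and $A=(F',R',>')$ with disjoint label sets, define $D+A=(F\cup F',R\cup R',>\cup>')$. Given theories $D_1,D_2$, an addition $A$ is modular if - $\Sigma(A)\cap\Sigma(D_2)\subseteq\Sigma(D_1)$, - $\Lambda(D_1)\cap\Lambda(A)=\emptyset$, and - $\Lambda(D_2)\cap\Lambda(A)=\emptyset$. Simulation. $\mathbf{DL}(d_1)$ can be simulated by $\mathbf{DL}(d_2)$ with respect to addition of rules if every theory $D_1$ has a theory $D_2$ such that, for every modular addition $A$ of the form $(\emptyset,R,\emptyset)$ and every $q\in\Sigma(D_1+A)$: - $D_1+A\vdash\pm d_1q$ iff $D_2+A\vdash\pm d_2q$ (same sign). *)

From Stdlib Require Import List Relations.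
Import ListNotations.

Definition atom := nat.
Definition label := nat.

Inductive lit : Type := Pos (p : atom) | Neg (p : atom).

Definition compl (q : lit) : lit :=
  match q with Pos p => Neg p | Neg p => Pos p end.

Inductive rkind : Type := Strict | Defeasible | Defeater.

Record rule : Type := mkRule {
  rlabel : label;
  rbody  : list lit;
  rhead  : lit;
  rkind_ : rkind }.

(* D = (F, R, >) ; superiority given as a finite set of pairs (t, s) meaning t > s *)
Record theory : Type := mkTheory {
  facts : list lit;
  rules : list rule;
  sup   : list (label * label) }.

Definition supR (D : theory) (t s : label) : Prop := In (t, s) (sup D).

Definition wf_theory (D : theory) : Prop :=
  NoDup (map rlabel (rules D)) /\
  forall x, ~ clos_trans label (supR D) x x.

Definition in_Rs (D : theory) (q : lit) (r : rule) : Prop :=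
  In r (rules D) /\ rhead r = q /\ rkind_ r = Strict.
Definition in_Rsd (D : theory) (q : lit) (r : rule) : Prop :=
  In r (rules D) /\ rhead r = q /\ (rkind_ r = Strict \/ rkind_ r = Defeasible).
Definition in_R (D : theory) (q : lit) (r : rule) : Prop :=
  In r (rules D) /\ rhead r = q.

Definition rsup (D : theory) (t s : rule) : Prop := supR D (rlabel t) (rlabel s).

Inductive tag : Type := TDelta | TPd | TPdStar | TDel | TSig | TDelStar | TSigStar.
Inductive sign : Type := Plus | Minus.

Definition concl : Type := (sign * tag * lit)%type.
Definition cset : Type := concl -> Prop.

Definition pl (E : cset) (d : tag) (a : lit) : Prop := E (Plus, d, a).
Definition mi (E : cset) (d : tag) (a : lit) : Prop := E (Minus, d, a).

Definition allP (E : cset) (d : tag) (r : rule) : Prop := forall a, In a (rbody r) -> pl E d a.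
Definition someM (E : cset) (d : tag) (r : rule) : Prop := exists a, In a (rbody r) /\ mi E d a.

(* Generic ambiguity-blocking clause family (partial / delta):
   d = tag being defined, e = tag used for attacking rules. *)
Definition plus_amb (D : theory) (E : cset) (d e : tag) (q : lit) : Prop :=
  pl E TDelta q \/
  ((exists r, in_Rsd D q r /\ allP E d r) /\
   mi E TDelta (compl q) /\
   (forall s, in_R D (compl q) s ->
      someM E e s \/ exists t, in_Rsd D q t /\ allP E d t /\ rsup D t s)).

Definition minus_amb (D : theory) (E : cset) (d e : tag) (q : lit) : Prop :=
  mi E TDelta q /\
  ((forall r, in_Rsd D q r -> someM E d r) \/
   pl E TDelta (compl q) \/
   (exists s, in_R D (compl q) s /\ allP E e s /\
      forall t, in_Rsd D q t -> someM E d t \/ ~ rsup D t s)).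

(* Individual-defeat clause family (partial-star / delta-star) *)
Definition plus_star (D : theory) (E : cset) (d e : tag) (q : lit) : Prop :=
  pl E TDelta q \/
  (exists r, in_Rsd D q r /\ allP E d r /\ mi E TDelta (compl q) /\
     forall s, in_R D (compl q) s -> someM E e s \/ rsup D r s).

Definition minus_star (D : theory) (E : cset) (d e : tag) (q : lit) : Prop :=
  mi E TDelta q /\
  (forall r, in_Rsd D q r ->
     someM E d r \/ pl E TDelta (compl q) \/
     exists s, in_R D (compl q) s /\ allP E e s /\ ~ rsup D r s).

(* Support clause family (sigma / sigma-star): d = support tag, e = attacking tag *)
Definition plus_sig (D : theory) (E : cset) (d e : tag) (q : lit) : Prop :=
  pl E TDelta q \/
  (exists r, in_Rsd D q r /\ allP E d r /\
     forall s, in_R D (compl q) s -> someM E e s \/ ~ rsup D s r).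

Definition minus_sig (D : theory) (E : cset) (d e : tag) (q : lit) : Prop :=
  mi E TDelta q /\
  (forall r, in_Rsd D q r ->
     someM E d r \/ exists s, in_R D (compl q) s /\ allP E e s /\ rsup D s r).

Definition T (D : theory) (E : cset) (c : concl) : Prop :=
  match c with
  | (Plus, TDelta, q) =>
      In q (facts D) \/ exists r, in_Rs D q r /\ allP E TDelta r
  | (Minus, TDelta, q) =>
      ~ In q (facts D) /\ forall r, in_Rs D q r -> someM E TDelta r
  | (Plus, TPd, q) => plus_amb D E TPd TPd q
  | (Minus, TPd, q) => minus_amb D E TPd TPd q
  | (Plus, TPdStar, q) => plus_star D E TPdStar TPdStar q
  | (Minus, TPdStar, q) => minus_star D E TPdStar TPdStar q
  | (Plus, TDel, q) => plus_amb D E TDel TSig q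
  | (Minus, TDel, q) => minus_amb D E TDel TSig q
  | (Plus, TSig, q) => plus_sig D E TSig TDel q
  | (Minus, TSig, q) => minus_sig D E TSig TDel q
  | (Plus, TDelStar, q) => plus_star D E TDelStar TSigStar q
  | (Minus, TDelStar, q) => minus_star D E TDelStar TSigStar q
  | (Plus, TSigStar, q) => plus_sig D E TSigStar TDelStar q
  | (Minus, TSigStar, q) => minus_sig D E TSigStar TDelStar q
  end.

Fixpoint Titer (D : theory) (n : nat) : cset :=
  match n with
  | O => fun _ => False
  | S m => T D (Titer D m)
  end.

Definition derives (D : theory) (c : concl) : Prop := exists n, Titer D n c.

Definition Sigma (D : theory) (q : lit) : Prop :=
  In q (facts D) \/
  exists r, In r (rules D) /\ (rhead r = q \/ In q (rbody r)).

Definition Lambda (D : theory) (l : label) : Prop :=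
  (exists r, In r (rules D) /\ rlabel r = l) \/
  (exists l', In (l, l') (sup D) \/ In (l', l) (sup D)).

Definition add (D A : theory) : theory :=
  mkTheory (facts D ++ facts A) (rules D ++ rules A) (sup D ++ sup A).

Definition modular (D1 D2 A : theory) : Prop :=
  (forall q, Sigma A q -> Sigma D2 q -> Sigma D1 q) /\
  (forall l, Lambda D1 l -> Lambda A l -> False) /\
  (forall l, Lambda D2 l -> Lambda A l -> False).

Definition simulates (d1 d2 : tag) : Prop :=
  forall D1 : theory, wf_theory D1 ->
  exists D2 : theory, wf_theory D2 /\
    forall RA : list rule,
      let A := mkTheory [] RA [] in
      wf_theory A -> modular D1 D2 A ->
      forall q, Sigma (add D1 A) q ->
        (derives (add D1 A) (Plus, d1, q) <-> derives (add D2 A) (Plus, d2, q)) /\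
        (derives (add D1 A) (Minus, d1, q) <-> derives (add D2 A) (Minus, d2, q)).

(* [translate D] simulates individual defeat by team defeat through two fresh atoms per
   rule.  For a rule [r] that is not a defeater, [c_atom r] reads "r is applicable and
   not individually defeated": it is derived from the body of [r] by [c_intro r] (of the kind of
   [r]), and attacked by the body of every rule [s] for the complementary literal that [r] does
   not beat, the attack winning exactly when [s > r]; [c_elim r] then passes [c_atom r] on to the
   head of [r].  For every rule [s], [v_atom s] reads "s is applicable and no rule beating it is
   undefeated": it is derived from the body of [s], overridden by [c_atom r] for each [r > s],
   and attacks the head of [s] through the defeater [v_elim s].  Superiority in [translate D]
   only relates rules for fresh literals, so for the original literals the team-defeat clauses
   of ∂ over [translate D + A] unfold to the individual-defeat clauses of ∂* over [D + A], and
   likewise for δ, σ and δ*, σ*.  Each direction is an induction on derivations; the backward one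
   carries along the meaning in [D + A] of every conclusion about a fresh atom.  Modularity
   keeps the added rules off the fresh atoms and out of the superiority relation. *)

From Stdlib Require Import List Relations Arith Lia Classical Cantor.
Import ListNotations.

(** * Locality and compactness of the proof operator *)

Definition queried (X : theory) (q a : lit) : Prop :=
  a = q \/ a = compl q \/ exists r, In r (rules X) /\ In a (rbody r).

(* [T X E (sg, t, q)] reads [E] only at conclusions about literals [queried X q]; the renaming
   [f] of tags turns the clauses of one logic into those of the other. *)
Section Transfer.
Variables (X : theory) (q : lit) (E E' : cset) (f : tag -> tag) (dom : tag -> Prop).
Hypothesis transfer : forall sg t a, dom t -> queried X q a -> E (sg, t, a) -> E' (sg, f t, a).
Hypothesis dom_Delta : dom TDelta.
Hypothesis f_Delta : f TDelta = TDelta.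

Lemma pl_transfer : pl E TDelta q -> pl E' TDelta q.
Proof. rewrite <- f_Delta at 2; apply transfer; [auto | left; reflexivity]. Qed.
Lemma mi_transfer : mi E TDelta q -> mi E' TDelta q.
Proof. rewrite <- f_Delta at 2; apply transfer; [auto | left; reflexivity]. Qed.
Lemma pl_transfer_compl : pl E TDelta (compl q) -> pl E' TDelta (compl q).
Proof. rewrite <- f_Delta at 2; apply transfer; [auto | right; left; reflexivity]. Qed.
Lemma mi_transfer_compl : mi E TDelta (compl q) -> mi E' TDelta (compl q).
Proof. rewrite <- f_Delta at 2; apply transfer; [auto | right; left; reflexivity]. Qed.
Lemma allP_transfer d r : dom d -> In r (rules X) -> allP E d r -> allP E' (f d) r.
Proof. intros Hd Hr H a Ha; apply transfer; [auto | right; right; eauto | exact (H a Ha)]. Qed.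
Lemma someM_transfer d r : dom d -> In r (rules X) -> someM E d r -> someM E' (f d) r.
Proof.
  intros Hd Hr [a [Ha H]]; exists a; split; [exact Ha|].
  apply transfer; [auto | right; right; eauto | exact H].
Qed.

Local Hint Resolve pl_transfer mi_transfer pl_transfer_compl mi_transfer_compl
  allP_transfer someM_transfer : core.
Local Hint Extern 1 (In _ (rules X)) =>
  match goal with H : in_R X _ ?r |- In ?r _ => apply H
             | H : in_Rsd X _ ?r |- In ?r _ => apply H
             | H : in_Rs X _ ?r |- In ?r _ => apply H end : core.

Lemma plus_Delta_transfer : T X E (Plus, TDelta, q) -> T X E' (Plus, TDelta, q).
Proof.
  intros [H | [r [Hr Hb]]]; [left; exact H | right; exists r; split; [exact Hr|]].
  rewrite <- f_Delta; apply allP_transfer; auto; apply Hr.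
Qed.

Lemma minus_Delta_transfer : T X E (Minus, TDelta, q) -> T X E' (Minus, TDelta, q).
Proof.
  intros [H0 H]; split; [exact H0|]; intros r Hr.
  rewrite <- f_Delta; apply someM_transfer; auto; apply Hr.
Qed.

Variables d e : tag.
Hypotheses (dom_d : dom d) (dom_e : dom e).

Lemma plus_amb_transfer : plus_amb X E d e q -> plus_amb X E' (f d) (f e) q.
Proof.
  intros [H | [[r [Hr Hb]] [Hc Hs]]]; [left; auto | right; split; [eauto | split; [auto|]]].
  intros s Hs'; destruct (Hs s Hs') as [H | [t [Ht [Htb Hts]]]]; [left | right]; eauto 6.
Qed.

Lemma minus_amb_transfer : minus_amb X E d e q -> minus_amb X E' (f d) (f e) q.
Proof.
  intros [H0 [H | [H | [s [Hs [Hsb Hst]]]]]]; split; auto.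
  right; right; exists s; split; [auto | split; [auto|]].
  intros t Ht; destruct (Hst t Ht); auto.
Qed.

Lemma plus_star_transfer : plus_star X E d e q -> plus_star X E' (f d) (f e) q.
Proof.
  intros [H | [r [Hr [Hb [Hc Hs]]]]]; [left; auto | right; exists r; split; [auto|]].
  split; [auto | split; [auto|]]; intros s Hs'; destruct (Hs s Hs'); auto.
Qed.

Lemma minus_star_transfer : minus_star X E d e q -> minus_star X E' (f d) (f e) q.
Proof.
  intros [H0 H]; split; [auto|]; intros r Hr.
  destruct (H r Hr) as [H1 | [H1 | [s [Hs [Hsb Hsr]]]]]; auto.
  right; right; exists s; auto.
Qed.

Lemma plus_sig_transfer : plus_sig X E d e q -> plus_sig X E' (f d) (f e) q.
Proof.
  intros [H | [r [Hr [Hb Hs]]]]; [left; auto | right; exists r; split; [auto|]].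
  split; [auto|]; intros s Hs'; destruct (Hs s Hs'); auto.
Qed.

Lemma minus_sig_transfer : minus_sig X E d e q -> minus_sig X E' (f d) (f e) q.
Proof.
  intros [H0 H]; split; [auto|]; intros r Hr.
  destruct (H r Hr) as [H1 | [s [Hs [Hsb Hsr]]]]; [left; auto | right; exists s; auto].
Qed.
End Transfer.

Lemma T_transfer X q (E E' : cset) sg t :
  (forall sg t a, queried X q a -> E (sg, t, a) -> E' (sg, t, a)) ->
  T X E (sg, t, q) -> T X E' (sg, t, q).
Proof.
  intros HE.
  assert (HE' : forall sg t a, True -> queried X q a -> E (sg, t, a) -> E' (sg, id t, a))
    by (intros; apply HE; auto).
  destruct sg, t; cbn;
    first [ apply (plus_Delta_transfer X q E E' id (fun _ => True))
          | apply (minus_Delta_transfer X q E E' id (fun _ => True))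
          | apply (plus_amb_transfer X q E E' id (fun _ => True))
          | apply (minus_amb_transfer X q E E' id (fun _ => True))
          | apply (plus_star_transfer X q E E' id (fun _ => True))
          | apply (minus_star_transfer X q E E' id (fun _ => True))
          | apply (plus_sig_transfer X q E E' id (fun _ => True))
          | apply (minus_sig_transfer X q E E' id (fun _ => True)) ]; auto.
Qed.

Lemma T_mono X (E E' : cset) c : (forall c', E c' -> E' c') -> T X E c -> T X E' c.
Proof. destruct c as [[sg t] q]; intros H; apply T_transfer; auto. Qed.

Lemma Titer_succ X n c : Titer X n c -> Titer X (S n) c.
Proof.
  revert c; induction n as [|n IH]; intros c H; [destruct H|].
  exact (T_mono X _ _ c IH H).
Qed.

Lemma Titer_le X n m c : n <= m -> Titer X n c -> Titer X m c.
Proof. induction 1; auto using Titer_succ. Qed.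

Lemma derives_bounded X (l : list concl) :
  exists N, forall c, In c l -> derives X c -> Titer X N c.
Proof.
  induction l as [|c l [N HN]]; [exists 0; intros c []|].
  destruct (classic (derives X c)) as [[M HM] | Hc].
  - exists (N + M); intros c' [<- | Hc'] Hd.
    + apply (Titer_le X M); [lia | exact HM].
    + apply (Titer_le X N); [lia | auto].
  - exists N; intros c' [<- | Hc'] Hd; [contradiction | auto].
Qed.

Definition all_tags : list tag := [TDelta; TPd; TPdStar; TDel; TSig; TDelStar; TSigStar].

(* The finitely many derivable conclusions queried by [c] are all derived within a common
   number of steps. *)
Lemma derives_closed X c : T X (derives X) c -> derives X c.
Proof.
  destruct c as [[sg t] q]; intros H.
  set (L := q :: compl q :: flat_map rbody (rules X)).
  destruct (derives_bounded X (list_prod (list_prod [Plus; Minus] all_tags) L)) as [N HN].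
  exists (S N); apply (T_transfer X q (derives X)); [|exact H].
  intros sg' t' a Ha Hd; apply HN; [|exact Hd].
  apply in_prod; [apply in_prod; [destruct sg'; cbn; auto | destruct t'; cbn; tauto]|].
  destruct Ha as [-> | [-> | [r [Hr Ha]]]]; cbn; auto.
  right; right; apply in_flat_map; eauto.
Qed.

Lemma derives_unfold X c : derives X c -> T X (derives X) c.
Proof.
  intros [[|n] Hn]; [destruct Hn|].
  apply (T_mono X (Titer X n)); [intros c' H; exists n; exact H | exact Hn].
Qed.

Lemma derives_ind X (S : cset) : (forall c, T X S c -> S c) -> forall c, derives X c -> S c.
Proof.
  intros HS c [n Hn]; revert c Hn; induction n as [|n IH]; intros c Hn; [destruct Hn|].
  apply HS, (T_mono X _ _ c IH Hn).
Qed.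

Lemma compl_involutive q : compl (compl q) = q.
Proof. destruct q; reflexivity. Qed.

Lemma compl_inj a b : compl a = compl b -> a = b.
Proof. intros H; rewrite <- (compl_involutive a), H; apply compl_involutive. Qed.

Lemma compl_swap a b : a = compl b -> b = compl a.
Proof. intros ->; symmetry; apply compl_involutive. Qed.

Definition lit_eq_dec (a b : lit) : {a = b} + {a <> b}.
Proof. decide equality; apply Nat.eq_dec. Defined.
Definition rkind_eq_dec (a b : rkind) : {a = b} + {a <> b}.
Proof. decide equality. Defined.
Definition rule_eq_dec (a b : rule) : {a = b} + {a <> b}.
Proof. decide equality; auto using rkind_eq_dec, lit_eq_dec, list_eq_dec, Nat.eq_dec. Defined.
Definition rsup_dec (D : theory) (r s : rule) : {rsup D r s} + {~ rsup D r s}.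
Proof. apply in_dec; intros a b; decide equality; apply Nat.eq_dec. Defined.

Definition sd_kind (r : rule) : Prop := rkind_ r = Strict \/ rkind_ r = Defeasible.

Lemma sd_kind_not_defeater r : sd_kind r <-> rkind_ r <> Defeater.
Proof. unfold sd_kind; destruct (rkind_ r); intuition discriminate. Qed.

Lemma strict_sd_kind r : rkind_ r = Strict -> sd_kind r.
Proof. intros H; left; exact H. Qed.

Lemma in_Rs_R X q t : in_Rs X q t -> in_R X q t.
Proof. intros [H1 [H2 _]]; split; assumption. Qed.
Lemma in_Rsd_R X q t : in_Rsd X q t -> in_R X q t.
Proof. intros [H1 [H2 _]]; split; assumption. Qed.

Lemma allP_singleton E d u a : rbody u = [a] -> allP E d u -> pl E d a.
Proof. intros Hb H; apply H; rewrite Hb; left; reflexivity. Qed.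
Lemma someM_singleton E d u a : rbody u = [a] -> someM E d u -> mi E d a.
Proof. intros Hb [b [Hin H]]; rewrite Hb in Hin; destruct Hin as [<- | []]; exact H. Qed.

Definition amb_tags (d e : tag) : Prop := (d = TPd /\ e = TPd) \/ (d = TDel /\ e = TSig).

Lemma amb_tags_pd : amb_tags TPd TPd.
Proof. left; split; reflexivity. Qed.
Lemma amb_tags_dl : amb_tags TDel TSig.
Proof. right; split; reflexivity. Qed.

Definition star (t : tag) : tag :=
  match t with TPd => TPdStar | TDel => TDelStar | TSig => TSigStar | t => t end.
Definition unstar (t : tag) : tag :=
  match t with TPdStar => TPd | TDelStar => TDel | TSigStar => TSig | t => t end.

Lemma T_plus_amb X E d e q : amb_tags d e -> T X E (Plus, d, q) = plus_amb X E d e q.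
Proof. intros [[-> ->] | [-> ->]]; reflexivity. Qed.
Lemma T_minus_amb X E d e q : amb_tags d e -> T X E (Minus, d, q) = minus_amb X E d e q.
Proof. intros [[-> ->] | [-> ->]]; reflexivity. Qed.
Lemma T_plus_star X E d e q : amb_tags d e ->
  T X E (Plus, star d, q) = plus_star X E (star d) (star e) q.
Proof. intros [[-> ->] | [-> ->]]; reflexivity. Qed.
Lemma T_minus_star X E d e q : amb_tags d e ->
  T X E (Minus, star d, q) = minus_star X E (star d) (star e) q.
Proof. intros [[-> ->] | [-> ->]]; reflexivity. Qed.

(** * The translation *)

Definition atom_of (q : lit) : atom := match q with Pos p => p | Neg p => p end.

Definition atom_bound (D : theory) : atom :=
  S (fold_right max 0
       (map atom_of (facts D ++ flat_map (fun r => rhead r :: rbody r) (rules D)))).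

Lemma fold_max_ge l x : In x l -> x <= fold_right max 0 l.
Proof. induction l as [|y l IH]; cbn; [intros []|intros [<-|H]; [|specialize (IH H)]; lia]. Qed.

Lemma Sigma_atom_lt D q : Sigma D q -> atom_of q < atom_bound D.
Proof.
  intros H; apply Nat.lt_succ_r, fold_max_ge, in_map, in_or_app.
  destruct H as [H | [r [Hr H]]]; [left; exact H | right].
  apply in_flat_map; exists r; split; [exact Hr|]; destruct H as [<- | H]; [left | right]; auto.
Qed.

Section Translation.
Variable D : theory.

(* Cantor pairing makes generated labels distinct, and [k = label mod 8] tells which of the
   eight shapes below a generated rule has. *)
Definition gen_label (k : nat) (a b : rule) : label := k + 8 * to_nat (rlabel a, rlabel b).
#[global] Arguments gen_label : simpl never.
Definition c_atom (r : rule) : atom := atom_bound D + 2 * rlabel r.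
Definition v_atom (s : rule) : atom := atom_bound D + 2 * rlabel s + 1.
#[global] Arguments c_atom : simpl never.
#[global] Arguments v_atom : simpl never.

Definition c_intro r := mkRule (gen_label 0 r r) (rbody r) (Pos (c_atom r)) (rkind_ r).
Definition c_elim r := mkRule (gen_label 1 r r) [Pos (c_atom r)] (rhead r) (rkind_ r).
Definition c_mention r := mkRule (gen_label 2 r r) [Neg (c_atom r)] (Pos (c_atom r)) Defeater.
Definition v_intro s := mkRule (gen_label 3 s s) (rbody s) (Pos (v_atom s)) Defeasible.
Definition v_elim s := mkRule (gen_label 4 s s) [Pos (v_atom s)] (rhead s) Defeater.
Definition v_mention s := mkRule (gen_label 5 s s) [Neg (v_atom s)] (Pos (v_atom s)) Defeater.
Definition c_attack s r := mkRule (gen_label 6 s r) (rbody s) (Neg (c_atom r)) Defeater.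
Definition v_defeat r s := mkRule (gen_label 7 r s) [Pos (c_atom r)] (Neg (v_atom s)) Defeater.

Definition rule_rules (r : rule) : list rule :=
  (if rkind_eq_dec (rkind_ r) Defeater then [] else [c_intro r; c_elim r; c_mention r]) ++
  [v_intro r; v_elim r; v_mention r].

Definition pair_rules (s r : rule) : list rule :=
  if rkind_eq_dec (rkind_ r) Defeater then [] else
  if lit_eq_dec (rhead s) (compl (rhead r)) then
    if rsup_dec D r s then [v_defeat r s] else [c_attack s r]
  else [].

Definition pair_sup (s r : rule) : list (label * label) :=
  if rkind_eq_dec (rkind_ r) Defeater then [] else
  if lit_eq_dec (rhead s) (compl (rhead r)) then
    if rsup_dec D r s then [(rlabel (v_defeat r s), rlabel (v_intro s))] else
    if rsup_dec D s r then [(rlabel (c_attack s r), rlabel (c_intro r))] else []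
  else [].

Definition translate : theory :=
  mkTheory (facts D)
    (nodup rule_eq_dec
       (flat_map rule_rules (rules D) ++
        flat_map (fun s => flat_map (pair_rules s) (rules D)) (rules D)))
    (flat_map (fun s => flat_map (pair_sup s) (rules D)) (rules D)).

Inductive generated : rule -> Prop :=
  | gen_c_intro r : In r (rules D) -> sd_kind r -> generated (c_intro r)
  | gen_c_elim r : In r (rules D) -> sd_kind r -> generated (c_elim r)
  | gen_c_mention r : In r (rules D) -> sd_kind r -> generated (c_mention r)
  | gen_v_intro s : In s (rules D) -> generated (v_intro s)
  | gen_v_elim s : In s (rules D) -> generated (v_elim s)
  | gen_v_mention s : In s (rules D) -> generated (v_mention s)
  | gen_c_attack s r : In s (rules D) -> In r (rules D) -> sd_kind r ->
      rhead s = compl (rhead r) -> ~ rsup D r s -> generated (c_attack s r)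
  | gen_v_defeat r s : In s (rules D) -> In r (rules D) -> sd_kind r ->
      rhead s = compl (rhead r) -> rsup D r s -> generated (v_defeat r s).

Inductive generated_sup : label -> label -> Prop :=
  | sup_v_defeat r s : In s (rules D) -> In r (rules D) -> sd_kind r ->
      rhead s = compl (rhead r) -> rsup D r s ->
      generated_sup (rlabel (v_defeat r s)) (rlabel (v_intro s))
  | sup_c_attack s r : In s (rules D) -> In r (rules D) -> sd_kind r ->
      rhead s = compl (rhead r) -> ~ rsup D r s -> rsup D s r ->
      generated_sup (rlabel (c_attack s r)) (rlabel (c_intro r)).

Lemma in_translate_rules t : In t (rules translate) <-> generated t.
Proof.
  cbn; rewrite nodup_In, in_app_iff, !in_flat_map; split.
  - intros [[r [Hr Ht]] | [s [Hs Ht]]].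
    + unfold rule_rules in Ht; rewrite in_app_iff in Ht.
      destruct (rkind_eq_dec (rkind_ r) Defeater) as [Hd|Hd];
        try rewrite <- sd_kind_not_defeater in Hd; cbn in Ht;
        repeat match type of Ht with
               | _ \/ _ => destruct Ht as [Ht|Ht]
               | _ = t => subst t
               | False => destruct Ht
               end; constructor; auto.
    + apply in_flat_map in Ht as [r [Hr Ht]]; unfold pair_rules in Ht.
      destruct (rkind_eq_dec (rkind_ r) Defeater) as [Hd|Hd]; [destruct Ht|].
      rewrite <- sd_kind_not_defeater in Hd.
      destruct (lit_eq_dec (rhead s) (compl (rhead r))) as [He|He]; [|destruct Ht].
      destruct (rsup_dec D r s); destruct Ht as [<-|[]]; constructor; auto.
  - intros []; [left; exists r | left; exists r | left; exists r | left; exists s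
                | left; exists s | left; exists s | right; exists s | right; exists s];
      (split; [auto|]); try (apply in_flat_map; exists r; split; [auto|]);
      unfold rule_rules, pair_rules;
      repeat match goal with
             | H : sd_kind ?r |- context [rkind_eq_dec (rkind_ ?r) Defeater] =>
                 destruct (rkind_eq_dec (rkind_ r) Defeater) as [Hx|_];
                 [apply sd_kind_not_defeater in H; contradiction|]
             | |- context [rkind_eq_dec (rkind_ ?r) Defeater] =>
                 destruct (rkind_eq_dec (rkind_ r) Defeater)
             | H : rhead ?s = compl (rhead ?r) |- context [lit_eq_dec (rhead ?s) _] =>
                 destruct (lit_eq_dec (rhead s) (compl (rhead r))); [|contradiction]
             | H : rsup D ?r ?s |- context [rsup_dec D ?r ?s] =>
                 destruct (rsup_dec D r s); [|contradiction]
             | H : ~ rsup D ?r ?s |- context [rsup_dec D ?r ?s] =>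
                 destruct (rsup_dec D r s); [contradiction|]
             end; cbn; tauto.
Qed.

Lemma in_translate_sup x y : In (x, y) (sup translate) <-> generated_sup x y.
Proof.
  cbn; rewrite in_flat_map; split.
  - intros [s [Hs H]]; apply in_flat_map in H as [r [Hr H]]; unfold pair_sup in H.
    destruct (rkind_eq_dec (rkind_ r) Defeater) as [Hd|Hd]; [destruct H|].
    rewrite <- sd_kind_not_defeater in Hd.
    destruct (lit_eq_dec (rhead s) (compl (rhead r))) as [He|He]; [|destruct H].
    destruct (rsup_dec D r s); [|destruct (rsup_dec D s r)];
      cbn in H; try contradiction; destruct H as [H|[]]; injection H as <- <-;
      constructor; auto.
  - intros []; exists s; split; auto; apply in_flat_map; exists r; split; auto;
      unfold pair_sup; destruct (rkind_eq_dec (rkind_ r) Defeater) as [Hd|_];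
      try (apply sd_kind_not_defeater in H1; contradiction);
      (destruct (lit_eq_dec (rhead s) (compl (rhead r))); [|contradiction]).
    + destruct (rsup_dec D r s); [left; reflexivity | contradiction].
    + destruct (rsup_dec D r s); [contradiction|].
      destruct (rsup_dec D s r); [left; reflexivity | contradiction].
Qed.
End Translation.

Lemma gen_label_inj k a b k' a' b' : k < 8 -> k' < 8 -> gen_label k a b = gen_label k' a' b' ->
  k = k' /\ rlabel a = rlabel a' /\ rlabel b = rlabel b'.
Proof.
  unfold gen_label; intros Hk Hk' H.
  assert (k = k' /\ to_nat (rlabel a, rlabel b) = to_nat (rlabel a', rlabel b')) as [-> Hp] by lia.
  apply (f_equal of_nat) in Hp; rewrite !cancel_of_to in Hp; injection Hp; auto.
Qed.

Lemma gen_label_mod k a b : k < 8 -> gen_label k a b mod 8 = k.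
Proof.
  intros Hk; unfold gen_label; rewrite Nat.mul_comm, Nat.Div0.mod_add; apply Nat.mod_small, Hk.
Qed.

Lemma generated_sup_mod D x y : generated_sup D x y ->
  (x mod 8 = 6 \/ x mod 8 = 7) /\ (y mod 8 = 0 \/ y mod 8 = 3).
Proof.
  intros []; cbn [rlabel v_defeat v_intro c_attack c_intro]; rewrite !gen_label_mod by lia; lia.
Qed.

Lemma NoDup_map_inj {A B} (f : A -> B) l x y :
  NoDup (map f l) -> In x l -> In y l -> f x = f y -> x = y.
Proof.
  induction l as [|a l IH]; cbn; [intros _ []|].
  intros Hn Hx Hy He; inversion Hn as [|? ? Ha Hl]; subst.
  destruct Hx as [<-|Hx], Hy as [<-|Hy]; auto;
    exfalso; apply Ha; [rewrite He | rewrite <- He]; apply in_map; auto.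
Qed.

Lemma wf_translate D : wf_theory D -> wf_theory (translate D).
Proof.
  intros [Hlab Hsup]; split.
  - apply NoDup_map_NoDup_ForallPairs; [|apply NoDup_nodup].
    intros x y Hx Hy Heq; apply in_translate_rules in Hx, Hy.
    destruct Hx; destruct Hy; cbn in Heq; apply gen_label_inj in Heq as [Hk [Ha Hb]];
      try lia; try discriminate;
      repeat match goal with
      | H : rlabel ?a = rlabel ?b |- _ =>
          assert (a = b) by (apply (NoDup_map_inj rlabel (rules D)); auto); clear H; subst
      end; reflexivity.
  - intros x Hx.
    enough (forall a b, clos_trans label (supR (translate D)) a b ->
              (a mod 8 = 6 \/ a mod 8 = 7) /\ (b mod 8 = 0 \/ b mod 8 = 3)) as Hc
      by (destruct (Hc x x Hx); lia).
    intros a b H; induction H as [a b H | a b c _ [Ha _] _ [_ Hc]]; [|auto].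
    apply (generated_sup_mod D), (in_translate_sup D), H.
Qed.

Definition aux_lit (D : theory) (q : lit) : Prop :=
  exists r, In r (rules D) /\
    ((sd_kind r /\ atom_of q = c_atom D r) \/ atom_of q = v_atom D r).

Lemma aux_lit_compl D q : aux_lit D (compl q) <-> aux_lit D q.
Proof. destruct q; reflexivity. Qed.

Lemma Sigma_not_aux D q : Sigma D q -> ~ aux_lit D q.
Proof.
  intros H%Sigma_atom_lt [r [_ [[_ Hq] | Hq]]]; unfold c_atom, v_atom in Hq; lia.
Qed.

Lemma aux_Sigma_translate D q : aux_lit D q -> Sigma (translate D) q.
Proof.
  intros [r [Hr [[Hd Hq] | Hq]]]; right.
  - exists (c_mention D r); split; [apply in_translate_rules; constructor; auto|].
    destruct q; cbn in Hq |- *; subst; auto.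
  - exists (v_mention D r); split; [apply in_translate_rules; constructor; auto|].
    destruct q; cbn in Hq |- *; subst; auto.
Qed.

Section Addition.
Variable D : theory.
Hypothesis wfD : wf_theory D.
Variable RA : list rule.
Let A := mkTheory [] RA [].
Hypothesis modA : modular D (translate D) A.

Definition DA := add D A.
Definition TA := add (translate D) A.

Lemma label_unique r r' : In r (rules D) -> In r' (rules D) -> rlabel r = rlabel r' -> r = r'.
Proof. apply NoDup_map_inj, wfD. Qed.

Lemma rsup_asym r s : rsup D r s -> ~ rsup D s r.
Proof. intros H1 H2; apply (proj2 wfD (rlabel r)); eapply t_trans; constructor; eauto. Qed.

Lemma c_atom_inj r r' : In r (rules D) -> In r' (rules D) -> c_atom D r = c_atom D r' -> r = r'.
Proof. unfold c_atom; intros; apply label_unique; auto; lia. Qed.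

Lemma v_atom_inj s s' : In s (rules D) -> In s' (rules D) -> v_atom D s = v_atom D s' -> s = s'.
Proof. unfold v_atom; intros; apply label_unique; auto; lia. Qed.

Lemma added_not_aux q : Sigma A q -> ~ aux_lit D q.
Proof.
  intros H Hq; apply (Sigma_not_aux D q); auto.
  apply (proj1 modA); auto using aux_Sigma_translate.
Qed.

Lemma added_head_not_aux t : In t RA -> ~ aux_lit D (rhead t).
Proof. intros H; apply added_not_aux; right; exists t; auto. Qed.
Lemma added_body_not_aux t : In t RA -> forall a, In a (rbody t) -> ~ aux_lit D a.
Proof. intros H a Ha; apply added_not_aux; right; exists t; auto. Qed.
Lemma rule_body_not_aux t : In t (rules D) -> forall a, In a (rbody t) -> ~ aux_lit D a.
Proof. intros H a Ha; apply Sigma_not_aux; right; exists t; auto. Qed.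
Lemma fact_not_aux q : In q (facts D) -> ~ aux_lit D q.
Proof. intros H; apply Sigma_not_aux; left; auto. Qed.

Lemma DA_body_not_aux t a : In t (rules DA) -> In a (rbody t) -> ~ aux_lit D a.
Proof.
  cbn; rewrite in_app_iff; intros [H|H]; eauto using rule_body_not_aux, added_body_not_aux.
Qed.

Lemma Sigma_DA_not_aux q : Sigma DA q -> ~ aux_lit D q.
Proof.
  intros [H | [r [Hr H]]]; cbn in *; [rewrite app_nil_r in H; auto using fact_not_aux|].
  apply in_app_iff in Hr as [Hr|Hr]; [apply Sigma_not_aux | apply added_not_aux];
    right; exists r; auto.
Qed.

Lemma facts_TA q : In q (facts TA) <-> In q (facts D).
Proof. cbn; rewrite app_nil_r; reflexivity. Qed.

Lemma rules_DA t : In t (rules DA) <-> In t (rules D) \/ In t RA.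
Proof. apply in_app_iff. Qed.
Lemma rules_TA t : In t (rules TA) <-> generated D t \/ In t RA.
Proof. unfold TA, add; cbn [rules]; rewrite in_app_iff, in_translate_rules; reflexivity. Qed.

Lemma added_unlabelled t : In t RA -> forall u,
  ~ In (rlabel t, u) (sup D) /\ ~ In (u, rlabel t) (sup D) /\
  ~ In (rlabel t, u) (sup (translate D)) /\ ~ In (u, rlabel t) (sup (translate D)).
Proof.
  intros Ht u; destruct modA as [_ [H1 H2]].
  assert (HA : Lambda A (rlabel t)) by (left; exists t; auto).
  repeat split; intros H; [apply (H1 (rlabel t)) | apply (H1 (rlabel t)) | apply (H2 (rlabel t))
    | apply (H2 (rlabel t))]; auto; right; exists u; auto.
Qed.

Lemma rsup_DA t u : rsup DA t u <-> rsup D t u.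
Proof. unfold rsup, supR; cbn; rewrite app_nil_r; reflexivity. Qed.
Lemma rsup_TA t u : rsup TA t u <-> generated_sup D (rlabel t) (rlabel u).
Proof. unfold rsup, supR, TA, add; cbn [sup]; rewrite app_nil_r, in_translate_sup; reflexivity. Qed.

Lemma rsup_added_l t u : In t RA -> ~ rsup D t u /\ ~ rsup TA t u.
Proof.
  intros Ht; unfold rsup, supR, TA, add; cbn [sup]; rewrite app_nil_r.
  split; apply (added_unlabelled t Ht).
Qed.
Lemma rsup_added_r t u : In u RA -> ~ rsup D t u /\ ~ rsup TA t u.
Proof.
  intros Hu; unfold rsup, supR, TA, add; cbn [sup]; rewrite app_nil_r.
  split; apply (added_unlabelled u Hu).
Qed.

Lemma rsup_TA_classes t u : rsup TA t u ->
  (rlabel t mod 8 = 6 \/ rlabel t mod 8 = 7) /\ (rlabel u mod 8 = 0 \/ rlabel u mod 8 = 3).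
Proof. rewrite rsup_TA; apply generated_sup_mod. Qed.

Ltac label_class H :=
  apply rsup_TA_classes in H; cbn [rlabel c_intro c_elim v_intro v_elim] in H;
  rewrite !gen_label_mod in H by lia; lia.

Lemma c_intro_not_superior r u : ~ rsup TA (c_intro D r) u.
Proof. intros H; label_class H. Qed.
Lemma v_intro_not_superior s u : ~ rsup TA (v_intro D s) u.
Proof. intros H; label_class H. Qed.
Lemma c_elim_not_inferior r u : ~ rsup TA u (c_elim D r).
Proof. intros H; label_class H. Qed.
Lemma v_elim_not_inferior s u : ~ rsup TA u (v_elim D s).
Proof. intros H; label_class H. Qed.

Lemma rsup_TA_c_attack s r : In s (rules D) -> In r (rules D) -> sd_kind r ->
  rhead s = compl (rhead r) -> rsup TA (c_attack D s r) (c_intro D r) <-> rsup D s r.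
Proof.
  intros Hs Hr Hd He; rewrite rsup_TA; split.
  - intros H; remember (rlabel (c_attack D s r)) as x eqn:Hx;
      remember (rlabel (c_intro D r)) as y eqn:Hy.
    destruct H as [r' s' | s' r' _ _ _ _ _ Hsr]; cbn in Hx, Hy;
      apply gen_label_inj in Hx as [Hk [Hl1 Hl2]]; try lia.
    unfold rsup, supR; rewrite <- Hl1, <- Hl2; exact Hsr.
  - intros H; constructor; auto using rsup_asym.
Qed.

Lemma rsup_TA_v_defeat r s : In s (rules D) -> In r (rules D) -> sd_kind r ->
  rhead s = compl (rhead r) -> rsup D r s -> rsup TA (v_defeat D r s) (v_intro D s).
Proof. intros; apply rsup_TA; constructor; auto. Qed.

Lemma rule_head_atom_lt t : In t (rules D) -> atom_of (rhead t) < atom_bound D.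
Proof. intros H; apply Sigma_atom_lt; right; exists t; auto. Qed.

Ltac inconsistent_head Hh :=
  exfalso;
  first [ discriminate Hh
        | injection Hh; unfold c_atom, v_atom; lia
        | match type of Hh with rhead ?x = ?q =>
            match goal with Hx : In x (rules D) |- _ =>
              let Hl := fresh in pose proof (rule_head_atom_lt x Hx) as Hl; rewrite Hh in Hl;
              cbn [atom_of] in Hl; unfold c_atom, v_atom in Hl; lia end end ].

Lemma rules_TA_not_aux q t : ~ aux_lit D q -> in_R TA q t ->
  (In t RA /\ rhead t = q) \/
  (exists r, In r (rules D) /\ sd_kind r /\ t = c_elim D r /\ rhead r = q) \/
  (exists s, In s (rules D) /\ t = v_elim D s /\ rhead s = q).
Proof.
  intros Hq [Ht Hh]; apply rules_TA in Ht as [Ht|Ht]; [|left; auto].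
  destruct Ht; cbn in Hh; subst q;
    try (exfalso; apply Hq;
         first [solve [exists r; split; [assumption|]; cbn [atom_of]; auto]
               | solve [exists s; split; [assumption|]; cbn [atom_of]; auto]]).
  - right; left; eauto.
  - right; right; eauto.
Qed.

Lemma rules_TA_c_atom r t : In r (rules D) -> sd_kind r -> in_R TA (Pos (c_atom D r)) t ->
  t = c_intro D r \/ t = c_mention D r.
Proof.
  intros Hr Hd [Ht Hh]; apply rules_TA in Ht as [Ht|Ht].
  - destruct Ht; cbn in Hh; try inconsistent_head Hh;
      apply (f_equal atom_of) in Hh; apply c_atom_inj in Hh; subst; auto.
  - exfalso; apply (added_head_not_aux t Ht); rewrite Hh; exists r; cbn; auto.
Qed.

Lemma rules_TA_neg_c_atom r t : In r (rules D) -> sd_kind r -> in_R TA (Neg (c_atom D r)) t ->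
  exists s, In s (rules D) /\ rhead s = compl (rhead r) /\ ~ rsup D r s /\ t = c_attack D s r.
Proof.
  intros Hr Hd [Ht Hh]; apply rules_TA in Ht as [Ht|Ht].
  - destruct Ht; cbn in Hh; try inconsistent_head Hh;
      apply (f_equal atom_of) in Hh; apply c_atom_inj in Hh; subst; eauto.
  - exfalso; apply (added_head_not_aux t Ht); rewrite Hh; exists r; cbn; auto.
Qed.

Lemma rules_TA_v_atom s t : In s (rules D) -> in_R TA (Pos (v_atom D s)) t ->
  t = v_intro D s \/ t = v_mention D s.
Proof.
  intros Hs [Ht Hh]; apply rules_TA in Ht as [Ht|Ht].
  - destruct Ht; cbn in Hh; try inconsistent_head Hh;
      apply (f_equal atom_of) in Hh; apply v_atom_inj in Hh; subst; auto.
  - exfalso; apply (added_head_not_aux t Ht); rewrite Hh; exists s; cbn; auto.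
Qed.

Lemma rules_TA_neg_v_atom s t : In s (rules D) -> in_R TA (Neg (v_atom D s)) t ->
  exists r, In r (rules D) /\ sd_kind r /\ rhead s = compl (rhead r) /\ rsup D r s /\
    t = v_defeat D r s.
Proof.
  intros Hs [Ht Hh]; apply rules_TA in Ht as [Ht|Ht].
  - destruct Ht; cbn in Hh; try inconsistent_head Hh;
      apply (f_equal atom_of) in Hh; apply v_atom_inj in Hh; subst; eauto 6.
  - exfalso; apply (added_head_not_aux t Ht); rewrite Hh; exists s; cbn; auto.
Qed.

Lemma sd_rules_TA_c_atom r t : In r (rules D) -> sd_kind r ->
  in_Rsd TA (Pos (c_atom D r)) t -> t = c_intro D r.
Proof.
  intros Hr Hd Ht; destruct (rules_TA_c_atom r t Hr Hd (in_Rsd_R _ _ _ Ht)) as [-> | ->]; [auto|].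
  destruct Ht as [_ [_ [Ht | Ht]]]; discriminate.
Qed.

Lemma sd_rules_TA_v_atom s t : In s (rules D) -> in_Rsd TA (Pos (v_atom D s)) t -> t = v_intro D s.
Proof.
  intros Hs Ht; destruct (rules_TA_v_atom s t Hs (in_Rsd_R _ _ _ Ht)) as [-> | ->]; [auto|].
  destruct Ht as [_ [_ [Ht | Ht]]]; discriminate.
Qed.

Lemma sd_rules_TA_not_aux q t : ~ aux_lit D q -> in_Rsd TA q t ->
  (In t RA /\ rhead t = q /\ sd_kind t) \/
  (exists r, In r (rules D) /\ sd_kind r /\ t = c_elim D r /\ rhead r = q).
Proof.
  intros Hq Ht; destruct (rules_TA_not_aux q t Hq (in_Rsd_R _ _ _ Ht))
    as [[Ht' Hh] | [Hr | [s [Hs [-> Hh]]]]];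
    [left; split; [exact Ht' | apply Ht] | right; exact Hr|].
  destruct Ht as [_ [_ [Ht | Ht]]]; discriminate.
Qed.

Lemma generated_in_TA t : generated D t -> In t (rules TA).
Proof. intros H; apply rules_TA; left; exact H. Qed.
Lemma added_in_TA t : In t RA -> In t (rules TA).
Proof. intros H; apply rules_TA; right; exact H. Qed.
Lemma rule_in_DA t : In t (rules D) -> In t (rules DA).
Proof. intros H; apply rules_DA; left; exact H. Qed.
Lemma added_in_DA t : In t RA -> In t (rules DA).
Proof. intros H; apply rules_DA; right; exact H. Qed.

#[local] Hint Resolve generated_in_TA added_in_TA rule_in_DA added_in_DA : core.
#[local] Hint Constructors generated : core.

Notation DerD := (derives DA).
Notation DerT := (derives TA).

Lemma c_atom_aux r : In r (rules D) -> sd_kind r -> aux_lit D (Pos (c_atom D r)).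
Proof. intros Hr Hd; exists r; auto. Qed.

Definition strictless_aux (q : lit) : Prop :=
  aux_lit D q /\ forall t, in_R TA q t -> rkind_ t <> Strict.

Lemma minus_Delta_strictless q : strictless_aux q -> DerT (Minus, TDelta, q).
Proof.
  intros [Ha H]; apply derives_closed; split.
  - rewrite facts_TA; intros Hf; exact (fact_not_aux q Hf Ha).
  - intros t Ht; exfalso; exact (H t (in_Rs_R _ _ _ Ht) (proj2 (proj2 Ht))).
Qed.

Lemma not_plus_Delta_strictless E q : strictless_aux q -> ~ T TA E (Plus, TDelta, q).
Proof.
  intros [Ha H] [Hf | [t [Ht _]]]; [exact (fact_not_aux q (proj1 (facts_TA q) Hf) Ha)|].
  exact (H t (in_Rs_R _ _ _ Ht) (proj2 (proj2 Ht))).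
Qed.

Lemma strictless_neg_c_atom r : In r (rules D) -> sd_kind r -> strictless_aux (Neg (c_atom D r)).
Proof.
  intros Hr Hd; split; [exists r; auto|].
  intros t Ht; destruct (rules_TA_neg_c_atom r t Hr Hd Ht) as [s [_ [_ [_ ->]]]]; discriminate.
Qed.

Lemma strictless_v_atom s : In s (rules D) -> strictless_aux (Pos (v_atom D s)).
Proof.
  intros Hs; split; [exists s; auto|].
  intros t Ht; destruct (rules_TA_v_atom s t Hs Ht) as [-> | ->]; discriminate.
Qed.

Lemma strictless_neg_v_atom s : In s (rules D) -> strictless_aux (Neg (v_atom D s)).
Proof.
  intros Hs; split; [exists s; auto|].
  intros t Ht; destruct (rules_TA_neg_v_atom s t Hs Ht) as [r [_ [_ [_ [_ ->]]]]]; discriminate.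
Qed.

(** * From [D + A] to [translate D + A] *)

Lemma minus_Delta_c_atom r : In r (rules D) -> sd_kind r ->
  (rkind_ r <> Strict \/ someM DerT TDelta r) -> DerT (Minus, TDelta, Pos (c_atom D r)).
Proof.
  intros Hr Hd H; apply derives_closed; split.
  - rewrite facts_TA; intros Hf; exact (fact_not_aux _ Hf (c_atom_aux r Hr Hd)).
  - intros t Ht; destruct (rules_TA_c_atom r t Hr Hd (in_Rs_R _ _ _ Ht)) as [-> | ->].
    + destruct H as [H|H]; [contradiction (proj2 (proj2 Ht)) | exact H].
    + discriminate (proj2 (proj2 Ht)).
Qed.

Lemma plus_Delta_c_atom r : In r (rules D) -> rkind_ r = Strict -> allP DerT TDelta r ->
  DerT (Plus, TDelta, Pos (c_atom D r)).
Proof.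
  intros Hr Hs H; apply derives_closed; right; exists (c_intro D r); split; [|exact H].
  repeat split; auto; apply generated_in_TA; constructor; [auto | left; exact Hs].
Qed.

(* The strict rule [c_elim r] has body [c_atom r], so [-Delta] of its head forces
   [-Delta c_atom r]. *)
Lemma minus_Delta_c_atom_of_head r : In r (rules D) -> sd_kind r ->
  DerT (Minus, TDelta, rhead r) -> DerT (Minus, TDelta, Pos (c_atom D r)).
Proof.
  intros Hr Hd H; destruct (rkind_eq_dec (rkind_ r) Strict) as [Hs|Hs];
    [|apply minus_Delta_c_atom; auto].
  apply derives_unfold in H as [_ H].
  destruct (H (c_elim D r)) as [a [[<- | []] Ha]]; [repeat split; auto | exact Ha].
Qed.

Lemma plus_c_atom d e (Hde : amb_tags d e) r : In r (rules D) -> sd_kind r -> allP DerT d r ->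
  (forall s, In s (rules D) -> rhead s = compl (rhead r) -> ~ rsup D r s -> someM DerT e s) ->
  DerT (Plus, d, Pos (c_atom D r)).
Proof.
  intros Hr Hd H1 H2; apply derives_closed; rewrite (T_plus_amb _ _ _ _ _ Hde).
  right; split; [exists (c_intro D r); split; [repeat split; auto | exact H1] | split].
  - apply minus_Delta_strictless, strictless_neg_c_atom; auto.
  - intros u Hu; destruct (rules_TA_neg_c_atom r u Hr Hd Hu) as [s [Hs [He [Hn ->]]]].
    left; exact (H2 s Hs He Hn).
Qed.

Lemma minus_c_atom d e (Hde : amb_tags d e) r : In r (rules D) -> sd_kind r ->
  DerT (Minus, TDelta, Pos (c_atom D r)) ->
  (someM DerT d r \/ exists s, In s (rules D) /\ rhead s = compl (rhead r) /\ ~ rsup D r s /\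
     allP DerT e s) ->
  DerT (Minus, d, Pos (c_atom D r)).
Proof.
  intros Hr Hd H0 H1; apply derives_closed; rewrite (T_minus_amb _ _ _ _ _ Hde).
  split; [exact H0|].
  pose proof (sd_rules_TA_c_atom r) as Hc.
  destruct H1 as [H1 | [s [Hs [He [Hn H1]]]]].
  - left; intros t Ht; rewrite (Hc t Hr Hd Ht); exact H1.
  - right; right; exists (c_attack D s r); split; [repeat split; auto | split; [exact H1|]].
    intros t Ht; right; rewrite (Hc t Hr Hd Ht); apply c_intro_not_superior.
Qed.

Lemma minus_c_atom_attacked d e (Hde : amb_tags d e) s : In s (rules D) -> sd_kind s ->
  DerT (Minus, TDelta, Pos (c_atom D s)) ->
  (someM DerT e s \/ exists r, In r (rules D) /\ rhead s = compl (rhead r) /\ rsup D r s /\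
     allP DerT d r) ->
  DerT (Minus, e, Pos (c_atom D s)).
Proof.
  intros Hs Hd H0 H1; destruct Hde as [[-> ->] | [-> ->]].
  - apply (minus_c_atom TPd TPd amb_tags_pd); auto.
    destruct H1 as [H1 | [r [Hr [He [Hn H1]]]]]; [left; exact H1 | right].
    exists r; auto using compl_swap, rsup_asym.
  - apply derives_closed; split; [exact H0|]; intros t Ht.
    rewrite (sd_rules_TA_c_atom s t Hs Hd Ht).
    destruct H1 as [H1 | [r [Hr [He [Hn H1]]]]]; [left; exact H1 | right].
    exists (c_attack D r s); split;
      [repeat split; auto using compl_swap, rsup_asym | split; [exact H1|]].
    apply rsup_TA_c_attack; auto using compl_swap.
Qed.

Lemma minus_v_atom d e (Hde : amb_tags d e) s : In s (rules D) ->
  (someM DerT e s \/ exists r, In r (rules D) /\ sd_kind r /\ rhead s = compl (rhead r) /\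
     rsup D r s /\ DerT (Plus, d, Pos (c_atom D r))) ->
  DerT (Minus, e, Pos (v_atom D s)).
Proof.
  intros Hs H1; pose proof (sd_rules_TA_v_atom s) as Hv.
  assert (Hd : forall r, In r (rules D) -> sd_kind r -> rhead s = compl (rhead r) -> rsup D r s ->
            in_R TA (Neg (v_atom D s)) (v_defeat D r s)) by (repeat split; auto).
  destruct Hde as [[-> ->] | [-> ->]]; apply derives_closed; split;
    try apply minus_Delta_strictless, strictless_v_atom; auto.
  - destruct H1 as [H1 | [r [Hr [Hdr [He [Hn H1]]]]]].
    + left; intros t Ht; rewrite (Hv t Hs Ht); exact H1.
    + right; right; exists (v_defeat D r s); split; [auto | split].
      * intros a [<- | []]; exact H1.
      * intros t Ht; right; rewrite (Hv t Hs Ht); apply v_intro_not_superior.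
  - intros t Ht; rewrite (Hv t Hs Ht).
    destruct H1 as [H1 | [r [Hr [Hdr [He [Hn H1]]]]]]; [left; exact H1 | right].
    exists (v_defeat D r s); split; [auto | split].
    + intros a [<- | []]; exact H1.
    + apply rsup_TA_v_defeat; auto.
Qed.

Lemma plus_v_atom d e (Hde : amb_tags d e) s : In s (rules D) -> allP DerT e s ->
  (forall r, In r (rules D) -> sd_kind r -> rhead s = compl (rhead r) -> rsup D r s ->
     DerT (Minus, d, Pos (c_atom D r))) ->
  DerT (Plus, e, Pos (v_atom D s)).
Proof.
  intros Hs H1 H2.
  assert (Hi : in_Rsd TA (Pos (v_atom D s)) (v_intro D s)) by (repeat split; auto).
  assert (Hn : forall u, in_R TA (compl (Pos (v_atom D s))) u -> someM DerT d u).
  { intros u Hu; destruct (rules_TA_neg_v_atom s u Hs Hu) as [r [Hr [Hdr [He [Hx ->]]]]].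
    exists (Pos (c_atom D r)); split; [left; auto | apply H2; auto]. }
  destruct Hde as [[-> ->] | [-> ->]]; apply derives_closed; right.
  - split; [exists (v_intro D s); auto | split; [|intros u Hu; left; auto]].
    apply minus_Delta_strictless, strictless_neg_v_atom; auto.
  - exists (v_intro D s); split; [auto | split; [exact H1|]].
    intros u Hu; left; auto.
Qed.

Lemma plus_sig_c_atom r : In r (rules D) -> sd_kind r -> allP DerT TSig r ->
  (forall s, In s (rules D) -> rhead s = compl (rhead r) -> rsup D s r -> someM DerT TDel s) ->
  DerT (Plus, TSig, Pos (c_atom D r)).
Proof.
  intros Hr Hd H1 H2; apply derives_closed; right.
  exists (c_intro D r); split; [repeat split; auto | split; [exact H1|]].
  intros u Hu; destruct (rules_TA_neg_c_atom r u Hr Hd Hu) as [s [Hs [He [Hn ->]]]].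
  destruct (classic (rsup D s r)) as [Hx | Hx]; [left; exact (H2 s Hs He Hx) | right].
  rewrite rsup_TA_c_attack; auto.
Qed.

Lemma TA_plus_Delta q : ~ aux_lit D q -> T DA DerT (Plus, TDelta, q) -> DerT (Plus, TDelta, q).
Proof.
  intros Hq [H | [r [Hr H]]]; apply derives_closed; [left; exact H | right].
  destruct Hr as [Hr [Hh Hk]]; apply rules_DA in Hr as [Hr | Hr].
  - exists (c_elim D r); split; [repeat split; auto using strict_sd_kind|].
    intros a [<- | []]; apply plus_Delta_c_atom; auto.
  - exists r; split; [repeat split; auto | exact H].
Qed.

Lemma TA_minus_Delta q : ~ aux_lit D q -> T DA DerT (Minus, TDelta, q) -> DerT (Minus, TDelta, q).
Proof.
  intros Hq [H0 H]; apply derives_closed; split; [exact H0|]; intros t Ht.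
  destruct (rules_TA_not_aux q t Hq (in_Rs_R _ _ _ Ht))
    as [[Ht' Hh] | [[r [Hr [Hd [-> Hh]]]] | [s [Hs [-> Hh]]]]].
  - apply H; repeat split; auto; apply Ht.
  - exists (Pos (c_atom D r)); split; [left; auto|].
    apply minus_Delta_c_atom; auto; right; apply H; repeat split; auto; apply Ht.
  - destruct Ht as [_ [_ Ht]]; discriminate.
Qed.

Lemma attackers_TA_refuted d e (Hde : amb_tags d e) q : ~ aux_lit D q ->
  DerT (Minus, TDelta, compl q) ->
  (forall s, in_R DA (compl q) s -> someM DerT e s \/
     exists r, In r (rules D) /\ sd_kind r /\ rhead r = q /\ rsup D r s /\ allP DerT d r /\
       DerT (Plus, d, Pos (c_atom D r))) ->
  forall u, in_R TA (compl q) u -> someM DerT e u.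
Proof.
  intros Hq H0 H u Hu.
  assert (Hq' : ~ aux_lit D (compl q)) by (rewrite aux_lit_compl; exact Hq).
  destruct (rules_TA_not_aux _ u Hq' Hu) as [[Hu' Hh] | [[s [Hs [Hd [-> Hh]]]] | [s [Hs [-> Hh]]]]].
  - destruct (H u (conj (added_in_DA u Hu') Hh)) as [H1 | [r [_ [_ [_ [Hx _]]]]]]; [exact H1|].
    exfalso; exact (proj1 (rsup_added_r r u Hu') Hx).
  - exists (Pos (c_atom D s)); split; [left; auto|].
    apply (minus_c_atom_attacked d e Hde); auto.
    + apply minus_Delta_c_atom_of_head; auto; rewrite Hh; exact H0.
    + destruct (H s (conj (rule_in_DA s Hs) Hh)) as [H1 | [r [Hr [_ [Hrh [Hx [H1 _]]]]]]];
        [left; exact H1 | right; exists r; repeat split; auto; rewrite Hh, Hrh; reflexivity].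
  - exists (Pos (v_atom D s)); split; [left; auto|].
    apply (minus_v_atom d e Hde); auto.
    destruct (H s (conj (rule_in_DA s Hs) Hh)) as [H1 | [r [Hr [Hd [Hrh [Hx [_ H1]]]]]]];
      [left; exact H1 | right; exists r; repeat split; auto; rewrite Hh, Hrh; reflexivity].
Qed.

Lemma TA_plus_amb d e (Hde : amb_tags d e) q : ~ aux_lit D q ->
  plus_star DA DerT d e q -> DerT (Plus, d, q).
Proof.
  intros Hq [H | [r [[Hr [Hh Hk]] [H1 [H2 H3]]]]];
    apply derives_closed; rewrite (T_plus_amb _ _ _ _ _ Hde); [left; exact H | right].
  apply rules_DA in Hr as [Hr | Hr].
  - assert (Hc : DerT (Plus, d, Pos (c_atom D r))).
    { apply (plus_c_atom d e Hde); auto.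
      intros s Hs He Hn; rewrite Hh in He.
      destruct (H3 s (conj (rule_in_DA s Hs) He)) as [H4 | H4]; [exact H4|].
      rewrite rsup_DA in H4; contradiction. }
    split; [exists (c_elim D r); split; [repeat split; auto | intros a [<- | []]; exact Hc]|].
    split; [exact H2|]; intros u Hu; left; revert u Hu.
    apply (attackers_TA_refuted d e Hde); auto.
    intros s Hs; destruct (H3 s Hs) as [H4 | H4]; [left; exact H4 | right].
    rewrite rsup_DA in H4; exists r; auto 6.
  - split; [exists r; split; [repeat split; auto | exact H1]|].
    split; [exact H2|]; intros u Hu; left; revert u Hu.
    apply (attackers_TA_refuted d e Hde); auto.
    intros s Hs; destruct (H3 s Hs) as [H4 | H4]; [left; exact H4|].
    rewrite rsup_DA in H4; exfalso; exact (proj1 (rsup_added_l r s Hr) H4).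
Qed.

Lemma TA_minus_amb d e (Hde : amb_tags d e) q : ~ aux_lit D q ->
  minus_star DA DerT d e q -> DerT (Minus, d, q).
Proof.
  intros Hq [H0 H]; apply derives_closed; rewrite (T_minus_amb _ _ _ _ _ Hde); split; [exact H0|].
  destruct (classic (pl DerT TDelta (compl q))) as [HB | HB]; [right; left; exact HB|].
  destruct (classic (exists s, In s RA /\ rhead s = compl q /\ allP DerT e s))
    as [[s [Hs [Hh H1]]] | HC].
  { right; right; exists s; split; [split; auto | split; [exact H1|]].
    intros t _; right; apply (rsup_added_r t s Hs). }
  assert (Hc : forall r, In r (rules D) -> sd_kind r -> rhead r = q ->
                 DerT (Minus, d, Pos (c_atom D r))).
  { intros r Hr Hd Hh; apply (minus_c_atom d e Hde); auto.
    - apply minus_Delta_c_atom_of_head; auto; rewrite Hh; exact H0.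
    - destruct (H r (conj (rule_in_DA r Hr) (conj Hh Hd))) as [H1 | [H1 | [s [[Hs Hsh] [H2 H3]]]]];
        [left; exact H1 | contradiction | right].
      apply rules_DA in Hs as [Hs | Hs]; [|exfalso; apply HC; eauto].
      rewrite rsup_DA in H3; exists s; rewrite Hsh, Hh; auto. }
  destruct (classic (forall t, In t RA -> rhead t = q -> sd_kind t -> someM DerT d t)) as [HA | HA].
  - left; intros t Ht.
    destruct (sd_rules_TA_not_aux q t Hq Ht) as [[Ht' [Hh Hk]] | [r [Hr [Hd [-> Hh]]]]].
    + apply HA; auto.
    + exists (Pos (c_atom D r)); split; [left; auto | apply Hc; auto].
  - apply not_all_ex_not in HA as [t HA].
    apply imply_to_and in HA as [Ht HA]; apply imply_to_and in HA as [Hh HA].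
    apply imply_to_and in HA as [Hk HA].
    destruct (H t (conj (added_in_DA t Ht) (conj Hh Hk))) as [H1 | [H1 | [s [[Hs Hsh] [H2 _]]]]];
      [contradiction | contradiction|].
    apply rules_DA in Hs as [Hs | Hs]; [|exfalso; apply HC; eauto].
    right; right; exists (v_elim D s); split; [split; auto | split].
    + intros a [<- | []]; apply (plus_v_atom d e Hde); auto.
      intros r Hr Hd He _; apply Hc; auto.
      rewrite <- (compl_involutive q), <- Hsh, He; symmetry; apply compl_involutive.
    + intros t' _; right; apply v_elim_not_inferior.
Qed.

Lemma TA_plus_sig q : ~ aux_lit D q -> plus_sig DA DerT TSig TDel q -> DerT (Plus, TSig, q).
Proof.
  intros Hq [H | [r [[Hr [Hh Hk]] [H1 H3]]]]; apply derives_closed; [left; exact H | right].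
  apply rules_DA in Hr as [Hr | Hr].
  - exists (c_elim D r); split; [repeat split; auto | split].
    + intros a [<- | []]; apply plus_sig_c_atom; auto.
      intros s Hs He Hx; rewrite Hh in He.
      destruct (H3 s (conj (rule_in_DA s Hs) He)) as [H4 | H4]; [exact H4|].
      rewrite rsup_DA in H4; contradiction.
    + intros s _; right; apply c_elim_not_inferior.
  - exists r; split; [repeat split; auto | split; [exact H1|]].
    intros s _; right; apply (rsup_added_r s r Hr).
Qed.

Lemma TA_minus_sig q : ~ aux_lit D q -> minus_sig DA DerT TSig TDel q -> DerT (Minus, TSig, q).
Proof.
  intros Hq [H0 H]; apply derives_closed; split; [exact H0|]; intros t Ht.
  destruct (sd_rules_TA_not_aux q t Hq Ht) as [[Ht' [Hh Hk]] | [r [Hr [Hd [-> Hh]]]]].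
  - destruct (H t (conj (added_in_DA t Ht') (conj Hh Hk))) as [H1 | [s [_ [_ H1]]]];
      [left; exact H1|].
    rewrite rsup_DA in H1; exfalso; exact (proj1 (rsup_added_r s t Ht') H1).
  - left; exists (Pos (c_atom D r)); split; [left; auto|].
    apply (minus_c_atom_attacked TDel TSig amb_tags_dl); auto.
    + apply minus_Delta_c_atom_of_head; auto; rewrite Hh; exact H0.
    + destruct (H r (conj (rule_in_DA r Hr) (conj Hh Hd))) as [H1 | [s [[Hs Hsh] [H2 H3]]]];
        [left; exact H1 | right].
      rewrite rsup_DA in H3; apply rules_DA in Hs as [Hs | Hs];
        [| exfalso; exact (proj1 (rsup_added_l s r Hs) H3)].
      exists s; split; [auto | split; [|auto]]; rewrite Hsh, Hh; symmetry; apply compl_involutive.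
Qed.

Lemma queried_DA_not_aux q a : ~ aux_lit D q -> queried DA q a -> ~ aux_lit D a.
Proof.
  intros Hq [-> | [-> | [r [Hr Ha]]]]; [exact Hq | rewrite aux_lit_compl; exact Hq|].
  exact (DA_body_not_aux r a Hr Ha).
Qed.

Definition star_tags : list tag := [TDelta; TPdStar; TDelStar; TSigStar].

Definition unstarred : cset :=
  fun c => match c with (sg, t, q) => ~ aux_lit D q -> In t star_tags -> DerT (sg, unstar t, q) end.

Lemma unstarred_closed c : T DA unstarred c -> unstarred c.
Proof.
  destruct c as [[sg t] q]; intros HT Hq Ht.
  assert (Htr : forall sg t a, In t star_tags -> queried DA q a -> unstarred (sg, t, a) ->
                  DerT (sg, unstar t, a))
    by (intros sg' t' a Ht' Ha H; exact (H (queried_DA_not_aux q a Hq Ha) Ht')).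
  assert (HD : In TDelta star_tags) by (cbn; tauto).
  assert (HP : In TPdStar star_tags) by (cbn; tauto).
  assert (HL : In TDelStar star_tags) by (cbn; tauto).
  assert (HS : In TSigStar star_tags) by (cbn; tauto).
  destruct Ht as [<- | [<- | [<- | [<- | []]]]]; destruct sg; cbn [unstar].
  - exact (TA_plus_Delta q Hq (plus_Delta_transfer DA q _ _ unstar _ Htr HD eq_refl HT)).
  - exact (TA_minus_Delta q Hq (minus_Delta_transfer DA q _ _ unstar _ Htr HD eq_refl HT)).
  - exact (TA_plus_amb TPd TPd amb_tags_pd q Hq
             (plus_star_transfer DA q _ _ unstar _ Htr HD eq_refl _ _ HP HP HT)).
  - exact (TA_minus_amb TPd TPd amb_tags_pd q Hq
             (minus_star_transfer DA q _ _ unstar _ Htr HD eq_refl _ _ HP HP HT)).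
  - exact (TA_plus_amb TDel TSig amb_tags_dl q Hq
             (plus_star_transfer DA q _ _ unstar _ Htr HD eq_refl _ _ HL HS HT)).
  - exact (TA_minus_amb TDel TSig amb_tags_dl q Hq
             (minus_star_transfer DA q _ _ unstar _ Htr HD eq_refl _ _ HL HS HT)).
  - exact (TA_plus_sig q Hq (plus_sig_transfer DA q _ _ unstar _ Htr HD eq_refl _ _ HS HL HT)).
  - exact (TA_minus_sig q Hq (minus_sig_transfer DA q _ _ unstar _ Htr HD eq_refl _ _ HS HL HT)).
Qed.

(** * From [translate D + A] back to [D + A] *)

Definition c_plus_Delta (r : rule) : Prop := rkind_ r = Strict /\ allP DerD TDelta r.
Definition c_minus_Delta (r : rule) : Prop := rkind_ r <> Strict \/ someM DerD TDelta r.
Definition c_plus (d e : tag) (r : rule) : Prop :=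
  c_plus_Delta r \/ (allP DerD d r /\ forall s, In s (rules D) -> rhead s = compl (rhead r) ->
    ~ rsup D r s -> someM DerD e s).
Definition c_minus (d e : tag) (r : rule) : Prop :=
  c_minus_Delta r /\ (someM DerD d r \/ exists s, In s (rules D) /\
    rhead s = compl (rhead r) /\ ~ rsup D r s /\ allP DerD e s).
Definition c_plus_sig (r : rule) : Prop :=
  c_plus_Delta r \/ (allP DerD TSigStar r /\ forall s, In s (rules D) ->
    rhead s = compl (rhead r) -> rsup D s r -> someM DerD TDelStar s).
Definition c_minus_sig (r : rule) : Prop :=
  c_minus_Delta r /\ (someM DerD TSigStar r \/ exists s, In s (rules D) /\
    rhead s = compl (rhead r) /\ rsup D s r /\ allP DerD TDelStar s).
Definition v_plus (e : tag) (C : rule -> Prop) (s : rule) : Prop :=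
  allP DerD e s /\ forall r, In r (rules D) -> sd_kind r -> rhead s = compl (rhead r) ->
    rsup D r s -> C r.
Definition v_minus (e : tag) (C : rule -> Prop) (s : rule) : Prop :=
  someM DerD e s \/ exists r, In r (rules D) /\ sd_kind r /\ rhead s = compl (rhead r) /\
    rsup D r s /\ C r.

Definition c_cond (sg : sign) (t : tag) : rule -> Prop :=
  match sg, t with
  | Plus, TDelta => c_plus_Delta | Minus, TDelta => c_minus_Delta
  | Plus, TPd => c_plus TPdStar TPdStar | Minus, TPd => c_minus TPdStar TPdStar
  | Plus, TDel => c_plus TDelStar TSigStar | Minus, TDel => c_minus TDelStar TSigStar
  | Plus, TSig => c_plus_sig | Minus, TSig => c_minus_sig
  | _, _ => fun _ => True
  end.

Definition v_cond (sg : sign) (t : tag) : rule -> Prop :=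
  match sg, t with
  | Plus, TDelta => fun _ => False
  | Plus, TPd => v_plus TPdStar (c_minus TPdStar TPdStar)
  | Minus, TPd => v_minus TPdStar (c_plus TPdStar TPdStar)
  | Plus, TSig => v_plus TSigStar (c_minus TDelStar TSigStar)
  | Minus, TSig => v_minus TSigStar (c_plus TDelStar TSigStar)
  | _, _ => fun _ => True
  end.

Lemma c_cond_amb d e : amb_tags d e ->
  c_cond Plus d = c_plus (star d) (star e) /\ c_cond Minus d = c_minus (star d) (star e).
Proof. intros [[-> ->] | [-> ->]]; split; reflexivity. Qed.

Definition base_tags : list tag := [TDelta; TPd; TDel; TSig].

Definition starred : cset := fun c => match c with (sg, t, q) =>
  (~ aux_lit D q -> In t base_tags -> DerD (sg, star t, q)) /\
  (forall r, In r (rules D) -> sd_kind r -> q = Pos (c_atom D r) -> c_cond sg t r) /\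
  (forall s, In s (rules D) -> q = Pos (v_atom D s) -> v_cond sg t s) /\
  (sg = Plus -> t = TDelta -> ~ strictless_aux q) end.

Lemma amb_base_tags d e : amb_tags d e -> In d base_tags /\ In e base_tags.
Proof. intros [[-> ->] | [-> ->]]; cbn; tauto. Qed.

Lemma starred_not_aux sg t q : ~ aux_lit D q -> In t base_tags -> starred (sg, t, q) ->
  DerD (sg, star t, q).
Proof. intros Hq Ht H; exact (proj1 H Hq Ht). Qed.

Lemma starred_allP t r : In t base_tags -> (forall a, In a (rbody r) -> ~ aux_lit D a) ->
  allP starred t r -> allP DerD (star t) r.
Proof. intros Ht Hb H a Ha; exact (starred_not_aux _ _ _ (Hb a Ha) Ht (H a Ha)). Qed.

Lemma starred_someM t r : In t base_tags -> (forall a, In a (rbody r) -> ~ aux_lit D a) ->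
  someM starred t r -> someM DerD (star t) r.
Proof.
  intros Ht Hb [a [Ha H]]; exists a; split; [exact Ha|].
  exact (starred_not_aux _ _ _ (Hb a Ha) Ht H).
Qed.

Lemma starred_c_atom sg t r : In r (rules D) -> sd_kind r -> starred (sg, t, Pos (c_atom D r)) ->
  c_cond sg t r.
Proof. intros Hr Hd H; exact (proj1 (proj2 H) r Hr Hd eq_refl). Qed.

Lemma starred_v_atom sg t s : In s (rules D) -> starred (sg, t, Pos (v_atom D s)) -> v_cond sg t s.
Proof. intros Hs H; exact (proj1 (proj2 (proj2 H)) s Hs eq_refl). Qed.

Lemma starred_strictless t q : strictless_aux q -> starred (Plus, t, q) -> t <> TDelta.
Proof. intros Hq H ->; exact (proj2 (proj2 (proj2 H)) eq_refl eq_refl Hq). Qed.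

Lemma base_TDelta : In TDelta base_tags. Proof. cbn; tauto. Qed.
Lemma base_TPd : In TPd base_tags. Proof. cbn; tauto. Qed.
Lemma base_TDel : In TDel base_tags. Proof. cbn; tauto. Qed.
Lemma base_TSig : In TSig base_tags. Proof. cbn; tauto. Qed.

Lemma starred_c_plus_Delta r : In r (rules D) -> sd_kind r ->
  T TA starred (Plus, TDelta, Pos (c_atom D r)) -> c_plus_Delta r.
Proof.
  intros Hr Hd [H | [t [Ht H]]].
  - exfalso; exact (fact_not_aux _ (proj1 (facts_TA _) H) (c_atom_aux r Hr Hd)).
  - destruct (rules_TA_c_atom r t Hr Hd (in_Rs_R _ _ _ Ht)) as [-> | ->];
      destruct Ht as [_ [_ Hk]]; [|discriminate].
    split; [exact Hk | exact (starred_allP TDelta r base_TDelta (rule_body_not_aux r Hr) H)].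
Qed.

Lemma starred_c_minus_Delta r : In r (rules D) -> sd_kind r ->
  T TA starred (Minus, TDelta, Pos (c_atom D r)) -> c_minus_Delta r.
Proof.
  intros Hr Hd [_ H].
  destruct (rkind_eq_dec (rkind_ r) Strict) as [Hs | Hs]; [right | left; exact Hs].
  apply (starred_someM TDelta r base_TDelta (rule_body_not_aux r Hr)), (H (c_intro D r)).
  repeat split; auto.
Qed.

Lemma starred_c_plus d e (Hde : amb_tags d e) r : In r (rules D) -> sd_kind r ->
  T TA starred (Plus, d, Pos (c_atom D r)) -> c_plus (star d) (star e) r.
Proof.
  intros Hr Hd HT; rewrite (T_plus_amb _ _ _ _ _ Hde) in HT.
  destruct (amb_base_tags d e Hde) as [Hbd Hbe].
  destruct HT as [H | [[t [Ht H1]] [_ H3]]];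
    [left; exact (starred_c_atom Plus TDelta r Hr Hd H) | right].
  rewrite (sd_rules_TA_c_atom r t Hr Hd Ht) in H1.
  split; [exact (starred_allP d r Hbd (rule_body_not_aux r Hr) H1)|].
  intros s Hs He Hn.
  destruct (H3 (c_attack D s r)) as [H4 | [t' [Ht' [_ H4]]]]; [repeat split; auto | |].
  - exact (starred_someM e s Hbe (rule_body_not_aux s Hs) H4).
  - rewrite (sd_rules_TA_c_atom r t' Hr Hd Ht') in H4; contradiction (c_intro_not_superior r _ H4).
Qed.

Lemma starred_c_minus d e (Hde : amb_tags d e) r : In r (rules D) -> sd_kind r ->
  T TA starred (Minus, d, Pos (c_atom D r)) -> c_minus (star d) (star e) r.
Proof.
  intros Hr Hd HT; rewrite (T_minus_amb _ _ _ _ _ Hde) in HT.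
  destruct (amb_base_tags d e Hde) as [Hbd Hbe].
  destruct HT as [H0 [H | [H | [u [Hu [H1 _]]]]]];
    (split; [exact (starred_c_atom Minus TDelta r Hr Hd H0)|]).
  - left; apply (starred_someM d r Hbd (rule_body_not_aux r Hr)), (H (c_intro D r)).
    repeat split; auto.
  - exfalso; exact (starred_strictless TDelta _ (strictless_neg_c_atom r Hr Hd) H eq_refl).
  - right; destruct (rules_TA_neg_c_atom r u Hr Hd Hu) as [s [Hs [He [Hn ->]]]].
    exists s; repeat split; auto; exact (starred_allP e s Hbe (rule_body_not_aux s Hs) H1).
Qed.

Lemma starred_c_plus_sig r : In r (rules D) -> sd_kind r ->
  T TA starred (Plus, TSig, Pos (c_atom D r)) -> c_plus_sig r.
Proof.
  intros Hr Hd [H | [t [Ht [H1 H3]]]]; [left; exact (starred_c_atom Plus TDelta r Hr Hd H) | right].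
  rewrite (sd_rules_TA_c_atom r t Hr Hd Ht) in H1, H3.
  split; [exact (starred_allP TSig r base_TSig (rule_body_not_aux r Hr) H1)|].
  intros s Hs He Hx.
  destruct (H3 (c_attack D s r)) as [H4 | H4]; [repeat split; auto using rsup_asym | |].
  - exact (starred_someM TDel s base_TDel (rule_body_not_aux s Hs) H4).
  - exfalso; apply H4, rsup_TA_c_attack; auto.
Qed.

Lemma starred_c_minus_sig r : In r (rules D) -> sd_kind r ->
  T TA starred (Minus, TSig, Pos (c_atom D r)) -> c_minus_sig r.
Proof.
  intros Hr Hd [H0 H]; split; [exact (starred_c_atom Minus TDelta r Hr Hd H0)|].
  destruct (H (c_intro D r)) as [H1 | [u [Hu [H1 H2]]]]; [repeat split; auto | |].
  - left; exact (starred_someM TSig r base_TSig (rule_body_not_aux r Hr) H1).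
  - right; destruct (rules_TA_neg_c_atom r u Hr Hd Hu) as [s [Hs [He [Hn ->]]]].
    exists s; split; [auto | split; [auto | split; [apply (rsup_TA_c_attack s r); auto|]]].
    exact (starred_allP TDel s base_TDel (rule_body_not_aux s Hs) H1).
Qed.

Lemma starred_v_plus_pd s : In s (rules D) ->
  T TA starred (Plus, TPd, Pos (v_atom D s)) -> v_plus TPdStar (c_minus TPdStar TPdStar) s.
Proof.
  intros Hs [H | [[t [Ht H1]] [_ H3]]]; [exfalso; exact (starred_v_atom Plus TDelta s Hs H)|].
  rewrite (sd_rules_TA_v_atom s t Hs Ht) in H1.
  split; [exact (starred_allP TPd s base_TPd (rule_body_not_aux s Hs) H1)|].
  intros r Hr Hd He Hx.
  destruct (H3 (v_defeat D r s)) as [H4 | [t' [Ht' [_ H4]]]]; [repeat split; auto | |].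
  - exact (starred_c_atom Minus TPd r Hr Hd (someM_singleton _ _ (v_defeat D r s) _ eq_refl H4)).
  - rewrite (sd_rules_TA_v_atom s t' Hs Ht') in H4; contradiction (v_intro_not_superior s _ H4).
Qed.

Lemma starred_v_minus_pd s : In s (rules D) ->
  T TA starred (Minus, TPd, Pos (v_atom D s)) -> v_minus TPdStar (c_plus TPdStar TPdStar) s.
Proof.
  intros Hs [H0 [H | [H | [u [Hu [H1 _]]]]]].
  - left; apply (starred_someM TPd s base_TPd (rule_body_not_aux s Hs)), (H (v_intro D s)).
    repeat split; auto.
  - exfalso; exact (starred_strictless TDelta _ (strictless_neg_v_atom s Hs) H eq_refl).
  - right; destruct (rules_TA_neg_v_atom s u Hs Hu) as [r [Hr [Hd [He [Hx ->]]]]].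
    exists r; repeat split; auto.
    exact (starred_c_atom Plus TPd r Hr Hd (allP_singleton _ _ (v_defeat D r s) _ eq_refl H1)).
Qed.

Lemma starred_v_plus_sig s : In s (rules D) ->
  T TA starred (Plus, TSig, Pos (v_atom D s)) -> v_plus TSigStar (c_minus TDelStar TSigStar) s.
Proof.
  intros Hs [H | [t [Ht [H1 H3]]]]; [exfalso; exact (starred_v_atom Plus TDelta s Hs H)|].
  rewrite (sd_rules_TA_v_atom s t Hs Ht) in H1, H3.
  split; [exact (starred_allP TSig s base_TSig (rule_body_not_aux s Hs) H1)|].
  intros r Hr Hd He Hx.
  destruct (H3 (v_defeat D r s)) as [H4 | H4]; [repeat split; auto | |].
  - exact (starred_c_atom Minus TDel r Hr Hd (someM_singleton _ _ (v_defeat D r s) _ eq_refl H4)).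
  - exfalso; apply H4, rsup_TA_v_defeat; auto.
Qed.

Lemma starred_v_minus_sig s : In s (rules D) ->
  T TA starred (Minus, TSig, Pos (v_atom D s)) -> v_minus TSigStar (c_plus TDelStar TSigStar) s.
Proof.
  intros Hs [_ H].
  destruct (H (v_intro D s)) as [H1 | [u [Hu [H1 _]]]]; [repeat split; auto | |].
  - left; exact (starred_someM TSig s base_TSig (rule_body_not_aux s Hs) H1).
  - right; destruct (rules_TA_neg_v_atom s u Hs Hu) as [r [Hr [Hd [He [Hx ->]]]]].
    exists r; repeat split; auto.
    exact (starred_c_atom Plus TDel r Hr Hd (allP_singleton _ _ (v_defeat D r s) _ eq_refl H1)).
Qed.

Lemma v_cond_amb d e : amb_tags d e ->
  v_cond Plus e = v_plus (star e) (c_minus (star d) (star e)) /\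
  v_cond Minus e = v_minus (star e) (c_plus (star d) (star e)).
Proof. intros [[-> ->] | [-> ->]]; split; reflexivity. Qed.

Lemma c_cond_attacker d e (Hde : amb_tags d e) s : c_cond Plus e s ->
  c_plus_Delta s \/ (allP DerD (star e) s /\ forall r, In r (rules D) ->
    rhead r = compl (rhead s) -> rsup D r s -> someM DerD (star d) r).
Proof.
  destruct Hde as [[-> ->] | [-> ->]]; [|auto].
  intros [HD | [H1 H2]]; [left; exact HD | right; split; [exact H1|]].
  intros r Hr He Hx; apply H2; auto using rsup_asym.
Qed.

Lemma plus_Delta_via_rule q r : In r (rules D) -> rhead r = q -> c_plus_Delta r ->
  DerD (Plus, TDelta, q).
Proof.
  intros Hr Hh [Hk H]; apply derives_closed; right.
  exists r; split; [repeat split; auto | exact H].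
Qed.

Lemma DA_plus_Delta q : ~ aux_lit D q -> T TA starred (Plus, TDelta, q) -> DerD (Plus, TDelta, q).
Proof.
  intros Hq [H | [t [Ht H]]]; [apply derives_closed; left; exact H|].
  destruct (rules_TA_not_aux q t Hq (in_Rs_R _ _ _ Ht))
    as [[Ht' Hh] | [[r [Hr [Hd [-> Hh]]]] | [s [_ [-> _]]]]].
  - apply derives_closed; right; exists t; split; [repeat split; auto; apply Ht|].
    exact (starred_allP TDelta t base_TDelta (added_body_not_aux t Ht') H).
  - apply (plus_Delta_via_rule q r Hr Hh), (starred_c_atom Plus TDelta r Hr Hd).
    exact (allP_singleton _ _ (c_elim D r) _ eq_refl H).
  - destruct Ht as [_ [_ Ht]]; discriminate.
Qed.

Lemma DA_minus_Delta q : ~ aux_lit D q -> T TA starred (Minus, TDelta, q) ->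
  DerD (Minus, TDelta, q).
Proof.
  intros Hq [H0 H]; apply derives_closed; split; [exact H0|]; intros t [Ht [Hh Hk]].
  apply rules_DA in Ht as [Ht | Ht].
  - assert (Hc : in_Rs TA q (c_elim D t)) by (repeat split; auto using strict_sd_kind).
    destruct (starred_c_atom Minus TDelta t Ht (strict_sd_kind t Hk)
                (someM_singleton _ _ (c_elim D t) _ eq_refl (H _ Hc))) as [Hs | Hs];
      [contradiction | exact Hs].
  - assert (Hc : in_Rs TA q t) by (repeat split; auto).
    exact (starred_someM TDelta t base_TDelta (added_body_not_aux t Ht) (H t Hc)).
Qed.

Lemma plus_star_via_rule d e (Hde : amb_tags d e) q r : In r (rules D) -> sd_kind r ->
  rhead r = q -> DerD (Minus, TDelta, compl q) ->
  (forall s, In s RA -> rhead s = compl q -> someM DerD (star e) s) ->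
  c_plus (star d) (star e) r -> DerD (Plus, star d, q).
Proof.
  intros Hr Hd Hh H0 HA [HD | [H1 H2]]; apply derives_closed; rewrite (T_plus_star _ _ _ _ _ Hde).
  - left; exact (plus_Delta_via_rule q r Hr Hh HD).
  - right; exists r; split; [repeat split; auto | split; [exact H1 | split; [exact H0|]]].
    intros s [Hs Hsh]; apply rules_DA in Hs as [Hs | Hs]; [|left; auto].
    destruct (classic (rsup D r s)) as [Hx | Hx]; [right; apply rsup_DA; exact Hx | left].
    apply H2; auto; rewrite Hsh, Hh; reflexivity.
Qed.

Lemma DA_plus_star d e (Hde : amb_tags d e) q : ~ aux_lit D q ->
  T TA starred (Plus, d, q) -> DerD (Plus, star d, q).
Proof.
  rewrite (T_plus_amb _ _ _ _ _ Hde); destruct (amb_base_tags d e Hde) as [Hbd Hbe].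
  intros Hq [H | [[t [Ht H1]] [H2 H3]]].
  { apply derives_closed; rewrite (T_plus_star _ _ _ _ _ Hde); left.
    exact (starred_not_aux _ _ _ Hq base_TDelta H). }
  assert (Hq' : ~ aux_lit D (compl q)) by (rewrite aux_lit_compl; exact Hq).
  assert (H0 : DerD (Minus, TDelta, compl q)) by exact (starred_not_aux _ _ _ Hq' base_TDelta H2).
  assert (HA : forall s, In s RA -> rhead s = compl q -> someM DerD (star e) s).
  { intros s Hs Hsh; destruct (H3 s (conj (added_in_TA s Hs) Hsh)) as [H4 | [u [_ [_ H4]]]].
    - exact (starred_someM e s Hbe (added_body_not_aux s Hs) H4).
    - contradiction (proj2 (rsup_added_r u s Hs) H4). }
  assert (HV : forall s, In s (rules D) -> rhead s = compl q ->
                 v_minus (star e) (c_plus (star d) (star e)) s).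
  { intros s Hs Hsh; destruct (H3 (v_elim D s)) as [H4 | [u [_ [_ H4]]]]; [split; auto | |].
    - rewrite <- (proj2 (v_cond_amb d e Hde)).
      exact (starred_v_atom Minus e s Hs (someM_singleton _ _ (v_elim D s) _ eq_refl H4)).
    - contradiction (v_elim_not_inferior s u H4). }
  destruct (sd_rules_TA_not_aux q t Hq Ht) as [[Ht' [Hh Hk]] | [r [Hr [Hd [-> Hh]]]]].
  - destruct (classic (forall s, In s (rules D) -> rhead s = compl q -> someM DerD (star e) s))
      as [HS | HS].
    + apply derives_closed; rewrite (T_plus_star _ _ _ _ _ Hde); right.
      exists t; split; [repeat split; auto | split; [|split; [exact H0|]]].
      * exact (starred_allP d t Hbd (added_body_not_aux t Ht') H1).
      * intros s [Hs Hsh]; left; apply rules_DA in Hs as [Hs | Hs]; auto.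
    + (* An attacker [s] not refuted by its body had [v_elim s] refuted, hence is beaten by an
         individually undefeated rule [r], which supports [q] itself. *)
      apply not_all_ex_not in HS as [s HS].
      apply imply_to_and in HS as [Hs HS]; apply imply_to_and in HS as [Hsh HS].
      destruct (HV s Hs Hsh) as [H4 | [r [Hr [Hd [He [_ Hc]]]]]]; [contradiction|].
      apply (plus_star_via_rule d e Hde q r); auto.
      apply compl_inj; rewrite <- He; exact Hsh.
  - apply (plus_star_via_rule d e Hde q r); auto.
    rewrite <- (proj1 (c_cond_amb d e Hde)).
    exact (starred_c_atom Plus d r Hr Hd (allP_singleton _ _ (c_elim D r) _ eq_refl H1)).
Qed.

Definition refuted_star (d e : tag) (q : lit) (r : rule) : Prop :=
  someM DerD d r \/ pl DerD TDelta (compl q) \/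
  exists s, in_R DA (compl q) s /\ allP DerD e s /\ ~ rsup DA r s.

Lemma refuted_of_c_minus d e q r : In r (rules D) -> rhead r = q -> c_minus d e r ->
  refuted_star d e q r.
Proof.
  intros Hr Hh [_ [H | [s [Hs [He [Hn H]]]]]]; [left; exact H | right; right].
  exists s; split; [split; auto; rewrite He, Hh; reflexivity | split; [exact H|]].
  rewrite rsup_DA; exact Hn.
Qed.

Lemma refuted_by_attacker d e q s : in_R DA (compl q) s -> allP DerD e s ->
  (forall r, In r (rules D) -> sd_kind r -> rhead r = q -> rsup D r s -> refuted_star d e q r) ->
  forall r, in_Rsd DA q r -> refuted_star d e q r.
Proof.
  intros Hs H1 H r [Hr [Hh Hk]].
  destruct (classic (rsup D r s)) as [Hx | Hx].
  - apply rules_DA in Hr as [Hr | Hr]; [apply H; auto|].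
    exfalso; exact (proj1 (rsup_added_l r s Hr) Hx).
  - right; right; exists s; split; [exact Hs | split; [exact H1 | rewrite rsup_DA; exact Hx]].
Qed.

Lemma DA_minus_star d e (Hde : amb_tags d e) q : ~ aux_lit D q ->
  T TA starred (Minus, d, q) -> DerD (Minus, star d, q).
Proof.
  rewrite (T_minus_amb _ _ _ _ _ Hde); destruct (amb_base_tags d e Hde) as [Hbd Hbe].
  assert (Hq' : ~ aux_lit D q -> ~ aux_lit D (compl q)) by (rewrite aux_lit_compl; auto).
  intros Hq [H0 H]; apply derives_closed; rewrite (T_minus_star _ _ _ _ _ Hde).
  split; [exact (starred_not_aux _ _ _ Hq base_TDelta H0)|].
  change (forall r, in_Rsd DA q r -> refuted_star (star d) (star e) q r).
  destruct H as [H | [H | [u [Hu [H1 _]]]]].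
  - intros r [Hr [Hh Hk]]; apply rules_DA in Hr as [Hr | Hr].
    + apply (refuted_of_c_minus _ _ q r Hr Hh); rewrite <- (proj2 (c_cond_amb d e Hde)).
      assert (Hc : in_Rsd TA q (c_elim D r)) by (repeat split; auto).
      exact (starred_c_atom Minus d r Hr Hk (someM_singleton _ _ (c_elim D r) _ eq_refl (H _ Hc))).
    + assert (Hc : in_Rsd TA q r) by (repeat split; auto).
      left; exact (starred_someM d r Hbd (added_body_not_aux r Hr) (H r Hc)).
  - intros r _; right; left; exact (starred_not_aux _ _ _ (Hq' Hq) base_TDelta H).
  - destruct (rules_TA_not_aux (compl q) u (Hq' Hq) Hu)
      as [[Hu' Hh] | [[s [Hs [Hd [-> Hh]]]] | [s [Hs [-> Hh]]]]].
    + apply (refuted_by_attacker _ _ q u); [split; auto | |].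
      * exact (starred_allP e u Hbe (added_body_not_aux u Hu') H1).
      * intros r Hr _ _ Hx; exfalso; exact (proj1 (rsup_added_r r u Hu') Hx).
    + destruct (c_cond_attacker d e Hde s
                  (starred_c_atom Plus e s Hs Hd (allP_singleton _ _ (c_elim D s) _ eq_refl H1)))
        as [HD | [H2 H3]].
      * intros r _; right; left; exact (plus_Delta_via_rule (compl q) s Hs Hh HD).
      * apply (refuted_by_attacker _ _ q s); [split; auto | exact H2|].
        intros r Hr _ Hrh Hx; left; apply H3; auto.
        rewrite Hrh, Hh; symmetry; apply compl_involutive.
    + pose proof (starred_v_atom Plus e s Hs (allP_singleton _ _ (v_elim D s) _ eq_refl H1)) as Hv.
      rewrite (proj1 (v_cond_amb d e Hde)) in Hv; destruct Hv as [H2 H3].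
      apply (refuted_by_attacker _ _ q s); [split; auto | exact H2|].
      intros r Hr Hd Hrh Hx; apply (refuted_of_c_minus _ _ q r Hr Hrh), H3; auto.
      rewrite Hh, Hrh; reflexivity.
Qed.

Lemma DA_plus_sig_star q : ~ aux_lit D q -> T TA starred (Plus, TSig, q) ->
  DerD (Plus, TSigStar, q).
Proof.
  intros Hq [H | [t [Ht [H1 _]]]];
    [apply derives_closed; left; exact (starred_not_aux _ _ _ Hq base_TDelta H)|].
  destruct (sd_rules_TA_not_aux q t Hq Ht) as [[Ht' [Hh Hk]] | [r [Hr [Hd [-> Hh]]]]].
  - apply derives_closed; right; exists t; split; [repeat split; auto|].
    split; [exact (starred_allP TSig t base_TSig (added_body_not_aux t Ht') H1)|].
    intros s _; right; rewrite rsup_DA; apply (rsup_added_r s t Ht').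
  - destruct (starred_c_atom Plus TSig r Hr Hd (allP_singleton _ _ (c_elim D r) _ eq_refl H1))
      as [HD | [H2 H3]]; apply derives_closed; [left; exact (plus_Delta_via_rule q r Hr Hh HD)|].
    right; exists r; split; [repeat split; auto | split; [exact H2|]].
    intros s [Hs Hsh]; rewrite rsup_DA; apply rules_DA in Hs as [Hs | Hs];
      [| right; apply (rsup_added_l s r Hs)].
    destruct (classic (rsup D s r)) as [Hx | Hx]; [left | right; exact Hx].
    apply H3; auto; rewrite Hsh, Hh; reflexivity.
Qed.

Lemma DA_minus_sig_star q : ~ aux_lit D q -> T TA starred (Minus, TSig, q) ->
  DerD (Minus, TSigStar, q).
Proof.
  intros Hq [H0 H]; apply derives_closed; split; [exact (starred_not_aux _ _ _ Hq base_TDelta H0)|].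
  intros r [Hr [Hh Hk]]; apply rules_DA in Hr as [Hr | Hr].
  - destruct (H (c_elim D r)) as [H1 | [u [_ [_ H1]]]]; [repeat split; auto | |].
    + destruct (starred_c_atom Minus TSig r Hr Hk (someM_singleton _ _ (c_elim D r) _ eq_refl H1))
        as [_ [H2 | [s [Hs [He [Hx H2]]]]]]; [left; exact H2 | right].
      exists s; split; [split; auto; rewrite He, Hh; reflexivity | split; [exact H2|]].
      rewrite rsup_DA; exact Hx.
    + contradiction (c_elim_not_inferior r u H1).
  - destruct (H r) as [H1 | [u [_ [_ H1]]]]; [repeat split; auto | |].
    + left; exact (starred_someM TSig r base_TSig (added_body_not_aux r Hr) H1).
    + contradiction (proj2 (rsup_added_r u r Hr) H1).
Qed.

Lemma starred_closed c : T TA starred c -> starred c.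
Proof.
  destruct c as [[sg t] q]; intros HT; split; [|split; [|split]].
  - intros Hq Ht; destruct Ht as [<- | [<- | [<- | [<- | []]]]]; destruct sg; cbn [star].
    + exact (DA_plus_Delta q Hq HT).
    + exact (DA_minus_Delta q Hq HT).
    + exact (DA_plus_star TPd TPd amb_tags_pd q Hq HT).
    + exact (DA_minus_star TPd TPd amb_tags_pd q Hq HT).
    + exact (DA_plus_star TDel TSig amb_tags_dl q Hq HT).
    + exact (DA_minus_star TDel TSig amb_tags_dl q Hq HT).
    + exact (DA_plus_sig_star q Hq HT).
    + exact (DA_minus_sig_star q Hq HT).
  - intros r Hr Hd ->; destruct sg, t; cbn [c_cond];
      first [ exact I
            | exact (starred_c_plus_Delta r Hr Hd HT) | exact (starred_c_minus_Delta r Hr Hd HT)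
            | exact (starred_c_plus _ _ amb_tags_pd r Hr Hd HT)
            | exact (starred_c_minus _ _ amb_tags_pd r Hr Hd HT)
            | exact (starred_c_plus _ _ amb_tags_dl r Hr Hd HT)
            | exact (starred_c_minus _ _ amb_tags_dl r Hr Hd HT)
            | exact (starred_c_plus_sig r Hr Hd HT) | exact (starred_c_minus_sig r Hr Hd HT) ].
  - intros s Hs ->; destruct sg, t; cbn [v_cond];
      first [ exact I
            | exact (not_plus_Delta_strictless _ _ (strictless_v_atom s Hs) HT)
            | exact (starred_v_plus_pd s Hs HT) | exact (starred_v_minus_pd s Hs HT)
            | exact (starred_v_plus_sig s Hs HT) | exact (starred_v_minus_sig s Hs HT) ].
  - intros -> -> Hs; exact (not_plus_Delta_strictless _ _ Hs HT).
Qed.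

Lemma simulation_DA_TA q sg t : Sigma DA q -> In t star_tags ->
  DerD (sg, t, q) <-> DerT (sg, unstar t, q).
Proof.
  intros Hq Ht; apply Sigma_DA_not_aux in Hq; split; intros H.
  - exact (derives_ind DA unstarred unstarred_closed _ H Hq Ht).
  - assert (Hb : In (unstar t) base_tags /\ star (unstar t) = t)
      by (destruct Ht as [<- | [<- | [<- | [<- | []]]]]; cbn; tauto).
    destruct Hb as [Hb Hs]; rewrite <- Hs.
    exact (proj1 (derives_ind TA starred starred_closed _ H) Hq Hb).
Qed.
End Addition.

Theorem theorem12 : simulates TPdStar TPd /\ simulates TDelStar TDel.
Proof.
  split; intros D wfD; exists (translate D); split; auto using wf_translate;
    intros RA A _ modA q Hq; split; apply (simulation_DA_TA D wfD RA modA q); cbn; tauto.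
Qed.
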